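(* Let $D^k$ be a vertically mapped wedge with $J^k>0$. Define the weak differentiation matrices $(\bm S^k_x)_{ij,i'j'}=\int_{\widehat W}\frac{\partial\phi_{i'j'}}{\partial x}\,\ell_{ij}\,J^k$ and $(\bm S^k_y)_{ij,i'j'}=\int_{\widehat W}\frac{\partial\phi_{i'j'}}{\partial y}\,\ell_{ij}\,J^k$, where $\phi_{i'j'}=\ell_{i'j'}\circ(\bm\Phi^k)^{-1}$ and the $x$-,$y$-derivatives are expressed via the chain rule in reference coordinates, and let $\bm D^k_x=(\bm M^k)^{-1}\bm S^k_x$, $\bm D^k_y=(\bm M^k)^{-1}\bm S^k_y$. Then $$\bm D^k_x=\big(r_x\bm D^{\mathrm{tri}}_r+s_x\bm D^{\mathrm{tri}}_s\big)\otimes\bm I_{N+1}+\bm L^{\mathrm{tri},k}\otimes\mathrm{diag}(t_xJ^k)\,\bm D^{\mathrm{1D}}_t,$$ $$\bm D^k_y=\big(r_y\bm D^{\mathrm{tri}}_r+s_y\bm D^{\mathrm{tri}}_s\big)\otimes\bm I_{N+1}+\bm L^{\mathrm{tri},k}\otimes\mathrm{diag}(t_yJ^k)\,\bm D^{\mathrm{1D}}_t,$$ where $r_x,s_x,r_y,s_y$ are the (constant) geometric factors of $D^k$, $\mathrm{diag}(t_xJ^k)$ (resp. $\mathrm{diag}(t_yJ^k)$) is the $(N+1)\times(N+1)$ diagonal matrix with entries $(t_xJ^k)(t_j)$ (resp. $(t_yJ^k)(t_j)$), $j=0,\dots,N$ (these quantities depend only on $t$), and $\bm L^{\mathrm{tri},k}=(\bm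 M^{\mathrm{tri},k})^{-1}\widehat{\bm M}^{\mathrm{tri}}$.
   Context: Reference wedge $\widehat W=\widehat T\times[0,1]$ with $\widehat T=\{(r,s):r,s\ge0,\ r+s\le1\}$. Vertex functions $v_1=(1-r-s)(1-t)$, $v_2=r(1-t)$, $v_3=s(1-t)$, $v_4=(1-r-s)t$, $v_5=rt$, $v_6=st$; a wedge $D^k$ is the image of $\widehat W$ under $\bm{\Phi}^k=\sum_{i=1}^6\bm{\nu}_iv_i$ with vertices $\bm{\nu}_i\in\mathbb{R}^3$, $(x,y,z)=\bm\Phi^k(r,s,t)$, and $J^k=\det[\partial_r\bm{\Phi}^k,\partial_s\bm{\Phi}^k,\partial_t\bm{\Phi}^k]$. It is vertically mapped if the pairs $(\bm{\nu}_1,\bm{\nu}_4)$, $(\bm{\nu}_2,\bm{\nu}_5)$, $(\bm{\nu}_3,\bm{\nu}_6)$ each have identical $x$- and $y$-coordinates. Geometric factors $r_x=\partial r/\partial x$, $t_x=\partial t/\partial x$, etc., are entries of the inverse Jacobian matrix of $\bm\Phi^k$. Nodal basis: fix $N\ge1$, points $(r_i,s_i)$, $i=1,\dots,(N+1)(N+2)/2$, in $\widehat T$ unisolvent for polynomials of total degree $\le N$ with Lagrange basis $\ell^{\mathrm{tri}}_i$, and Gauss–Legendre–Lobatto points $0=t_0<\dots<t_N=1$ with Lagrange basis $\ell^{\mathrm{1D}}_j$; $\ell_{ij}=\ell^{\mathrm{tri}}_i(r,s)\ell^{\mathrm{1D}}_j(t)$. Matrices indexed by $(i,j)$ are ordered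 with $i$ the slow index, so $(\bm A\otimes\bm B)_{ij,i'j'}=\bm A_{ii'}\bm B_{jj'}$. Definitions: $(\bm M^k)_{ij,i'j'}=\int_{\widehat W}\ell_{ij}\ell_{i'j'}J^k$; $(\bm M^{\mathrm{tri},k})_{ii'}=\int_{\widehat T}\ell^{\mathrm{tri}}_i\ell^{\mathrm{tri}}_{i'}J^k(r,s)$ (where $J^k$ is independent of $t$ for vertically mapped wedges); $(\widehat{\bm M}^{\mathrm{tri}})_{ii'}=\int_{\widehat T}\ell^{\mathrm{tri}}_i\ell^{\mathrm{tri}}_{i'}$; nodal differentiation matrices $(\bm D^{\mathrm{tri}}_r)_{ii'}=\partial_r\ell^{\mathrm{tri}}_{i'}(r_i,s_i)$, $(\bm D^{\mathrm{tri}}_s)_{ii'}=\partial_s\ell^{\mathrm{tri}}_{i'}(r_i,s_i)$, $(\bm D^{\mathrm{1D}}_t)_{jj'}=(\ell^{\mathrm{1D}}_{j'})'(t_j)$; $\bm I_{N+1}$ is the $(N+1)\times(N+1)$ identity. *)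

From Stdlib Require Import Reals List Arith ClassicalEpsilon.
Open Scope R_scope.

Definition deriv (f : R -> R) (x : R) : R :=
  epsilon (inhabits 0) (fun l => derivable_pt_lim f x l).

Definition Rint (f : R -> R) (a b : R) : R :=
  epsilon (inhabits 0) (fun I => exists pr : Riemann_integrable f a b, RiemannInt pr = I).

Definition intT (g : R -> R -> R) : R :=
  Rint (fun r => Rint (fun s => g r s) 0 (1 - r)) 0 1.

Definition intW (f : R -> R -> R -> R) : R :=
  Rint (fun r => Rint (fun s => Rint (fun t => f r s t) 0 1) 0 (1 - r)) 0 1.

Definition d_r (f : R -> R -> R -> R) (r s t : R) : R := deriv (fun u => f u s t) r.
Definition d_s (f : R -> R -> R -> R) (r s t : R) : R := deriv (fun u => f r u t) s.
Definition d_t (f : R -> R -> R -> R) (r s t : R) : R := deriv (fun u => f r s u) t.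

Definition msum {I : Type} (l : list I) (f : I -> R) : R :=
  fold_right (fun i acc => f i + acc) 0 l.

Definition mmul {I : Type} (l : list I) (A B : I -> I -> R) : I -> I -> R :=
  fun i k => msum l (fun j => A i j * B j k).

Definition idm {I : Type} (eqd : forall x y : I, {x = y} + {x <> y}) : I -> I -> R :=
  fun i k => if eqd i k then 1 else 0.

Definition is_inv {I : Type} (l : list I) (eqd : forall x y : I, {x = y} + {x <> y})
  (A B : I -> I -> R) : Prop :=
  forall i k, In i l -> In k l ->
    mmul l A B i k = idm eqd i k /\ mmul l B A i k = idm eqd i k.

Definition minv {I : Type} (l : list I) (eqd : forall x y : I, {x = y} + {x <> y})
  (A : I -> I -> R) : I -> I -> R :=
  epsilon (inhabits (fun _ _ => 0)) (fun B => is_inv l eqd A B).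

Definition idx1 (n : nat) : list nat := seq 0 n.
Definition idx2 (n m : nat) : list (nat * nat) := list_prod (seq 0 n) (seq 0 m).

Definition pair_eq_dec : forall x y : nat * nat, {x = y} + {x <> y}.
Proof. decide equality; apply Nat.eq_dec. Defined.

Definition kron (A B : nat -> nat -> R) : nat * nat -> nat * nat -> R :=
  fun p q => A (fst p) (fst q) * B (snd p) (snd q).

Definition vfun (i : nat) (r s t : R) : R :=
  match i with
  | 1%nat => (1 - r - s) * (1 - t)
  | 2%nat => r * (1 - t)
  | 3%nat => s * (1 - t)
  | 4%nat => (1 - r - s) * t
  | 5%nat => r * t
  | 6%nat => s * t
  | _ => 0
  end.

(* nu i c : coordinate c (0 = x, 1 = y, 2 = z) of vertex nu_i, i = 1..6 *)
Definition Phi (nu : nat -> nat -> R) (c : nat) (r s t : R) : R :=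
  nu 1%nat c * vfun 1 r s t + nu 2%nat c * vfun 2 r s t + nu 3%nat c * vfun 3 r s t
  + nu 4%nat c * vfun 4 r s t + nu 5%nat c * vfun 5 r s t + nu 6%nat c * vfun 6 r s t.

Definition vertically_mapped (nu : nat -> nat -> R) : Prop :=
  nu 1%nat 0%nat = nu 4%nat 0%nat /\ nu 1%nat 1%nat = nu 4%nat 1%nat /\
  nu 2%nat 0%nat = nu 5%nat 0%nat /\ nu 2%nat 1%nat = nu 5%nat 1%nat /\
  nu 3%nat 0%nat = nu 6%nat 0%nat /\ nu 3%nat 1%nat = nu 6%nat 1%nat.

(* Jacobian matrix: row c = physical coordinate (x,y,z), column b = reference
   variable (r,s,t); i.e. columns are d_r Phi, d_s Phi, d_t Phi *)
Definition Jmat (nu : nat -> nat -> R) (r s t : R) : nat -> nat -> R :=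
  fun c b =>
    match b with
    | 0%nat => d_r (Phi nu c) r s t
    | 1%nat => d_s (Phi nu c) r s t
    | _ => d_t (Phi nu c) r s t
    end.

Definition det3 (A : nat -> nat -> R) : R :=
  A 0%nat 0%nat * (A 1%nat 1%nat * A 2%nat 2%nat - A 1%nat 2%nat * A 2%nat 1%nat)
  - A 0%nat 1%nat * (A 1%nat 0%nat * A 2%nat 2%nat - A 1%nat 2%nat * A 2%nat 0%nat)
  + A 0%nat 2%nat * (A 1%nat 0%nat * A 2%nat 1%nat - A 1%nat 1%nat * A 2%nat 0%nat).

Definition Jac (nu : nat -> nat -> R) (r s t : R) : R := det3 (Jmat nu r s t).

(* geometric factors: entries of the inverse Jacobian matrix;
   gfac nu b c = d(reference var b)/d(physical coord c), e.g.
   r_x = gfac 0 0, s_x = gfac 1 0, t_x = gfac 2 0, r_y = gfac 0 1, s_y = gfac 1 1,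
   t_y = gfac 2 1 *)
Definition gfac (nu : nat -> nat -> R) (b c : nat) (r s t : R) : R :=
  minv (idx1 3) Nat.eq_dec (Jmat nu r s t) b c.

Definition in_W (r s t : R) : Prop := 0 <= r /\ 0 <= s /\ r + s <= 1 /\ 0 <= t <= 1.

Definition is_polyN (N : nat) (f : R -> R -> R) : Prop :=
  exists c : nat -> nat -> R, forall r s,
    f r s = sum_f_R0 (fun a => sum_f_R0 (fun b => c a b * r ^ a * s ^ b) (N - a)) N.

Definition Ntri (N : nat) : nat := ((N + 1) * (N + 2) / 2)%nat.

Fixpoint legendre (n : nat) (x : R) : R :=
  match n with
  | O => 1
  | S m =>
    match m with
    | O => x
    | S k => ((2 * INR k + 3) * x * legendre m x - (INR k + 1) * legendre k x) / (INR k + 2)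
    end
  end.

(* tn 0 < ... < tn N are the N+1 Gauss-Legendre-Lobatto points mapped to [0,1]:
   endpoints 0, 1 and the interior points are the roots of P_N' (mapped by x = 2t-1) *)
Definition is_GLL (N : nat) (tn : nat -> R) : Prop :=
  tn 0%nat = 0 /\ tn N = 1 /\
  (forall j, (j < N)%nat -> tn j < tn (S j)) /\
  (forall j, (0 < j)%nat -> (j < N)%nat -> deriv (legendre N) (2 * tn j - 1) = 0).

Definition lag1D (N : nat) (tn : nat -> R) (j : nat) (t : R) : R :=
  fold_right (fun m acc => (if Nat.eq_dec m j then 1 else (t - tn m) / (tn j - tn m)) * acc)
    1 (seq 0 (S N)).

(* On a vertically mapped wedge x and y do not depend on t, so J^k depends only on (r,s),
   the geometric factors r_x, s_x, r_y, s_y are constant, and t_x J^k, t_y J^k depend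
   affinely on t alone.  Hence the mass matrix of the tensor basis is the Kronecker product
   M^tri,k (x) M^1D, and every term of S^k_x, S^k_y is a triangle integral times an interval
   integral.  Nodal interpolation is exact on the polynomials that occur (d_r l^tri, d_s l^tri
   have degree <= N in (r,s); (t_x J^k) d_t l^1D has degree <= N in t), which rewrites these
   integrals as M^tri,k D^tri_r, M^1D diag(t_x J^k) D^1D_t, ...  This gives S^k = M^k RHS,
   and M^k is invertible since its factors are Gram matrices of a positive weight. *)

From Pilot Require Import Defs.
From Stdlib Require Import Reals List Arith Lra Lia ClassicalEpsilon FunctionalExtensionality.
From Coquelicot Require Import Coquelicot.
From mathcomp Require all_boot all_order all_algebra Rstruct zify.
Open Scope R_scope.

Lemma msum_app {I} (l1 l2 : list I) (f : I -> R) : msum (l1 ++ l2) f = msum l1 f + msum l2 f.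
Proof. induction l1; simpl; [ring | rewrite IHl1; ring]. Qed.

Lemma msum_map {I J} (g : I -> J) (l : list I) (f : J -> R) : msum (map g l) f = msum l (fun i => f (g i)).
Proof. induction l; simpl; [ring | rewrite IHl; ring]. Qed.

Lemma msum_ext {I} (l : list I) (f g : I -> R) : (forall i, In i l -> f i = g i) -> msum l f = msum l g.
Proof. induction l; simpl; intros H; [ring |]. rewrite H, IHl; auto. Qed.

Lemma msum_plus {I} (l : list I) (f g : I -> R) : msum l (fun i => f i + g i) = msum l f + msum l g.
Proof. induction l; simpl; [ring | rewrite IHl; ring]. Qed.

Lemma msum_scal_l {I} (l : list I) c (f : I -> R) : msum l (fun i => c * f i) = c * msum l f.
Proof. induction l; simpl; [ring | rewrite IHl; ring]. Qed.

Lemma msum_scal_r {I} (l : list I) c (f : I -> R) : msum l (fun i => f i * c) = msum l f * c.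
Proof. induction l; simpl; [ring | rewrite IHl; ring]. Qed.

Lemma msum_zero {I} (l : list I) (f : I -> R) : (forall i, In i l -> f i = 0) -> msum l f = 0.
Proof. induction l; simpl; intros H; [ring |]. rewrite H, IHl; auto; ring. Qed.

Lemma msum_swap {I J} (l : list I) (l' : list J) f :
  msum l (fun i => msum l' (fun j => f i j)) = msum l' (fun j => msum l (fun i => f i j)).
Proof.
  induction l; simpl.
  - symmetry; apply msum_zero; auto.
  - rewrite IHl, <- msum_plus. reflexivity.
Qed.

Lemma msum_list_prod {I J} (l : list I) (l' : list J) f :
  msum (list_prod l l') f = msum l (fun i => msum l' (fun j => f (i, j))).
Proof. induction l; simpl; [reflexivity |]. rewrite msum_app, msum_map, IHl. reflexivity. Qed.

Lemma msum_mul {I J} (l : list I) (l' : list J) f g :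
  msum l f * msum l' g = msum (list_prod l l') (fun p => f (fst p) * g (snd p)).
Proof.
  rewrite msum_list_prod, <- msum_scal_r. apply msum_ext; intros i _.
  rewrite <- msum_scal_l. reflexivity.
Qed.

Lemma msum_delta {I} (eqd : forall x y : I, {x = y} + {x <> y}) l i (f : I -> R) :
  NoDup l -> In i l -> msum l (fun j => (if eqd i j then 1 else 0) * f j) = f i.
Proof.
  induction l as [|a l IH]; simpl; intros Hnd Hin; [contradiction |].
  inversion Hnd; subst. destruct (eqd i a) as [<- | ne].
  - rewrite msum_zero; [ring |]. intros j Hj. destruct (eqd i j); [subst; contradiction | ring].
  - destruct Hin as [Hin | Hin]; [congruence |]. rewrite IH; auto; ring.
Qed.

Lemma msum_delta_r {I} (eqd : forall x y : I, {x = y} + {x <> y}) l i (f : I -> R) :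
  NoDup l -> In i l -> msum l (fun j => f j * (if eqd j i then 1 else 0)) = f i.
Proof.
  intros. rewrite <- (msum_delta eqd l i f); auto. apply msum_ext; intros j _.
  destruct (eqd j i), (eqd i j); subst; try ring; congruence.
Qed.

Lemma NoDup_list_prod {I J} (l : list I) (l' : list J) :
  NoDup l -> NoDup l' -> NoDup (list_prod l l').
Proof.
  induction l as [|a l IH]; simpl; intros H1 H2; [constructor |].
  inversion H1; subst. apply NoDup_app; auto.
  - apply NoDup_map_NoDup_ForallPairs; auto. intros x y _ _ E; congruence.
  - intros [x y] Hx Hy. apply in_map_iff in Hx. destruct Hx as [z [E _]]. inversion E; subst.
    apply in_prod_iff in Hy. tauto.
Qed.

Lemma In_idx1 n i : In i (idx1 n) <-> (i < n)%nat.
Proof. unfold idx1. rewrite in_seq. lia. Qed.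

Lemma In_idx2 n m p : In p (idx2 n m) <-> (fst p < n)%nat /\ (snd p < m)%nat.
Proof. destruct p. unfold idx2. rewrite in_prod_iff, !In_idx1. reflexivity. Qed.

Lemma NoDup_idx1 n : NoDup (idx1 n).
Proof. apply seq_NoDup. Qed.

Lemma NoDup_idx2 n m : NoDup (idx2 n m).
Proof. apply NoDup_list_prod; apply seq_NoDup. Qed.

Section Matrices.
Context {I : Type} (l : list I) (eqd : forall x y : I, {x = y} + {x <> y}).
Hypothesis Hl : NoDup l.

Lemma mmul_assoc A B C i k : mmul l (mmul l A B) C i k = mmul l A (mmul l B C) i k.
Proof.
  unfold mmul. transitivity (msum l (fun j => msum l (fun m => A i m * B m j * C j k))).
  - apply msum_ext; intros. rewrite <- msum_scal_r. reflexivity.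
  - rewrite msum_swap. apply msum_ext; intros. rewrite <- msum_scal_l.
    apply msum_ext; intros; ring.
Qed.

Lemma mmul_idm_l A i k : In i l -> mmul l (idm eqd) A i k = A i k.
Proof. intros. apply (msum_delta eqd l i (fun j => A j k)); auto. Qed.

Lemma mmul_idm_r A i k : In k l -> mmul l A (idm eqd) i k = A i k.
Proof. intros. apply (msum_delta_r eqd l k (fun j => A i j)); auto. Qed.

Lemma mmul_ext_l A A' B i k : (forall j, In j l -> A i j = A' i j) ->
  mmul l A B i k = mmul l A' B i k.
Proof. intros E. apply msum_ext; intros j Hj. rewrite E; auto. Qed.

Lemma mmul_ext_r A B B' i k : (forall j, In j l -> B j k = B' j k) ->
  mmul l A B i k = mmul l A B' i k.
Proof. intros E. apply msum_ext; intros j Hj. rewrite E; auto. Qed.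

Lemma mmul_plus_r A B C i k :
  mmul l A (fun j k => B j k + C j k) i k = mmul l A B i k + mmul l A C i k.
Proof. unfold mmul. rewrite <- msum_plus. apply msum_ext; intros; ring. Qed.

Lemma is_inv_ext A A' B : (forall i k, In i l -> In k l -> A i k = A' i k) ->
  is_inv l eqd A B -> is_inv l eqd A' B.
Proof.
  intros E H i k Hi Hk. destruct (H i k Hi Hk) as [H1 H2]. split.
  - rewrite <- H1. apply mmul_ext_l. intros; symmetry; auto.
  - rewrite <- H2. apply mmul_ext_r. intros; symmetry; auto.
Qed.

Lemma is_inv_unique A B B' : is_inv l eqd A B -> is_inv l eqd A B' ->
  forall i k, In i l -> In k l -> B i k = B' i k.
Proof.
  intros H H' i k Hi Hk.
  rewrite <- (mmul_idm_l B' i k), <- (mmul_idm_r B i k) by auto.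
  transitivity (mmul l (mmul l B A) B' i k).
  - rewrite mmul_assoc. apply mmul_ext_r. intros j Hj. symmetry; apply H'; auto.
  - apply mmul_ext_l. intros j Hj. apply H; auto.
Qed.

Lemma minv_correct A B : is_inv l eqd A B -> is_inv l eqd A (minv l eqd A).
Proof. intros H. unfold minv. apply epsilon_spec. exists B; exact H. Qed.

Lemma minv_unique A B i k : is_inv l eqd A B -> In i l -> In k l -> minv l eqd A i k = B i k.
Proof. intros HB Hi Hk. apply (is_inv_unique A); auto. apply (minv_correct A B HB). Qed.

Lemma mmul_minv_cancel_l A B X i k : is_inv l eqd A B -> In i l ->
  mmul l (minv l eqd A) (mmul l A X) i k = X i k.
Proof.
  intros HB Hi. rewrite <- mmul_assoc, <- (mmul_idm_l X i k) by auto.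
  apply mmul_ext_l. intros j Hj. apply (minv_correct A B); auto.
Qed.

Lemma mmul_minv_cancel_r A B X i k : is_inv l eqd A B -> In i l ->
  mmul l A (mmul l (minv l eqd A) X) i k = X i k.
Proof.
  intros HB Hi. rewrite <- mmul_assoc, <- (mmul_idm_l X i k) by auto.
  apply mmul_ext_l. intros j Hj. apply (minv_correct A B); auto.
Qed.

End Matrices.

Section Kronecker.
Variables (l l' : list nat).

Lemma mmul_kron A B C D p q :
  mmul (list_prod l l') (kron A B) (kron C D) p q = kron (mmul l A C) (mmul l' B D) p q.
Proof.
  unfold mmul, kron. rewrite msum_mul. apply msum_ext; intros; ring.
Qed.

Lemma idm_pair p q : idm pair_eq_dec p q = kron (idm Nat.eq_dec) (idm Nat.eq_dec) p q.
Proof.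
  destruct p as [a b], q as [a' b']. unfold idm, kron; cbn [fst snd].
  destruct (pair_eq_dec (a, b) (a', b')) as [E | E];
    destruct (Nat.eq_dec a a'); destruct (Nat.eq_dec b b');
    try (inversion E; congruence); subst; try ring; congruence.
Qed.

Lemma is_inv_kron A A' B B' :
  is_inv l Nat.eq_dec A A' -> is_inv l' Nat.eq_dec B B' ->
  is_inv (list_prod l l') pair_eq_dec (kron A B) (kron A' B').
Proof.
  intros HA HB [a b] [a' b'] Hp Hq. apply in_prod_iff in Hp, Hq.
  destruct (HA a a') as [HA1 HA2]; try tauto.
  destruct (HB b b') as [HB1 HB2]; try tauto.
  rewrite !mmul_kron, idm_pair. unfold kron; cbn [fst snd]. rewrite HA1, HA2, HB1, HB2. auto.
Qed.

End Kronecker.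

Lemma deriv_unique f x l : derivable_pt_lim f x l -> deriv f x = l.
Proof.
  intros H. unfold deriv. apply (uniqueness_limite f x); auto.
  apply epsilon_spec. exists l; exact H.
Qed.

Definition continuous_R (f : R -> R) : Prop := forall x, continuous f x.

Lemma continuous_R_const c : continuous_R (fun _ => c).
Proof. intros x; apply continuous_const. Qed.

Lemma continuous_R_id : continuous_R (fun x => x).
Proof. intros x; apply continuous_id. Qed.

Lemma continuous_R_plus f g : continuous_R f -> continuous_R g -> continuous_R (fun x => f x + g x).
Proof. intros Hf Hg x. apply (continuous_plus f g x); auto. Qed.

Lemma continuous_R_mult f g : continuous_R f -> continuous_R g -> continuous_R (fun x => f x * g x).
Proof. intros Hf Hg x. apply (continuous_mult f g x); auto. Qed.

Lemma continuous_R_pow f n : continuous_R f -> continuous_R (fun x => f x ^ n).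
Proof.
  intros Hf. induction n; simpl.
  - apply continuous_R_const.
  - apply continuous_R_mult; auto.
Qed.

Lemma continuous_R_msum {I} (l : list I) (f : I -> R -> R) :
  (forall i, In i l -> continuous_R (f i)) -> continuous_R (fun x => msum l (fun i => f i x)).
Proof.
  induction l; simpl; intros H.
  - apply continuous_R_const.
  - apply continuous_R_plus; auto.
Qed.

Lemma continuous_R_ext f g : (forall x, f x = g x) -> continuous_R f -> continuous_R g.
Proof. intros E H. replace g with f; auto. apply functional_extensionality; auto. Qed.

Lemma continuous_R_derivable f : (forall x, exists l, derivable_pt_lim f x l) -> continuous_R f.
Proof.
  intros H x. destruct (H x) as [l Hl].
  apply (ex_derive_continuous (K := R_AbsRing) (V := R_NormedModule)).
  exists l. apply is_derive_Reals; auto.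
Qed.

Lemma ex_RInt_continuous_R f a b : continuous_R f -> ex_RInt f a b.
Proof. intros H. apply (@ex_RInt_continuous R_CompleteNormedModule). intros; apply H. Qed.

Lemma Rint_RInt f a b : ex_RInt f a b -> Rint f a b = RInt f a b.
Proof.
  intros H. pose proof (ex_RInt_Reals_0 _ _ _ H) as pr.
  unfold Rint.
  assert (E : exists I, exists pr : Riemann_integrable f a b, RiemannInt pr = I)
    by (exists (RiemannInt pr); exists pr; reflexivity).
  destruct (epsilon_spec (inhabits 0) _ E) as [pr' <-].
  symmetry; apply RInt_Reals.
Qed.

Lemma Rint_continuous f a b : continuous_R f -> Rint f a b = RInt f a b.
Proof. intros; apply Rint_RInt, ex_RInt_continuous_R; auto. Qed.

Lemma Rint_ext_on f g a b : a <= b -> (forall x, a <= x <= b -> g x = f x) -> ex_RInt f a b ->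
  Rint g a b = RInt f a b.
Proof.
  intros Hab E H.
  rewrite Rint_RInt.
  - apply RInt_ext. rewrite Rmin_left, Rmax_right by lra. intros; apply E; lra.
  - apply (ex_RInt_ext f); auto. rewrite Rmin_left, Rmax_right by lra.
    intros; symmetry; apply E; lra.
Qed.

Lemma RInt_msum {I} (l : list I) (f : I -> R -> R) a b :
  (forall i, In i l -> continuous_R (f i)) ->
  RInt (fun x => msum l (fun i => f i x)) a b = msum l (fun i => RInt (f i) a b).
Proof.
  induction l; simpl; intros H.
  - rewrite RInt_const. unfold scal; simpl; unfold mult; simpl. ring.
  - rewrite <- IHl by auto.
    apply (RInt_plus (f a0) (fun x => msum l (fun i => f i x)));
      apply ex_RInt_continuous_R; auto. apply continuous_R_msum; auto.
Qed.

Lemma RInt_scal_l f a b c : continuous_R f -> RInt (fun x => c * f x) a b = c * RInt f a b.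
Proof. intros H. apply (RInt_scal f a b c), ex_RInt_continuous_R, H. Qed.

Lemma continuous_R_RInt_upper w : continuous_R w -> continuous_R (fun r => RInt w 0 (1 - r)).
Proof.
  intros Hw x.
  apply (continuous_comp (fun r => 1 - r) (RInt w 0)).
  - apply (continuous_minus (fun _ => 1) (fun r => r)); [apply continuous_const | apply continuous_id].
  - apply (continuous_RInt_1 w 0 (1 - x) (RInt w 0)).
    apply filter_forall. intros z. apply (@RInt_correct R_CompleteNormedModule).
    apply ex_RInt_continuous_R; auto.
Qed.

(* A positive value at [x0] would, by continuity, give a positive integral near [x0]. *)
Lemma RInt_nonneg_eq0 f a b : continuous_R f -> a < b -> (forall x, a <= x <= b -> 0 <= f x) ->
  RInt f a b = 0 -> forall x, a <= x <= b -> f x = 0.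
Proof.
  intros Hc Hab Hpos HI x0 Hx0.
  destruct (Hpos x0 Hx0) as [Hp | Hp]; [| auto]. exfalso.
  assert (Hcont : continuity_pt f x0) by (apply continuity_pt_filterlim, Hc).
  destruct (Hcont (f x0 / 2)) as [del [Hdel Hd]]; [lra |].
  set (c := Rmax a (x0 - del / 2)). set (d := Rmin b (x0 + del / 2)).
  assert (Hcd : a <= c /\ c < d /\ d <= b) by (unfold c, d, Rmax, Rmin; repeat destruct Rle_dec; lra).
  assert (Hgt : 0 < RInt f c d).
  { apply RInt_gt_0; [lra | intros x Hx | intros; apply Hc].
    destruct (Req_dec x x0) as [-> | Hne]; [lra |].
    assert (Hx' : Rabs (x - x0) < del)
      by (apply Rabs_def1; unfold c, d, Rmax, Rmin in Hx; repeat destruct Rle_dec in Hx; lra).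
    assert (Hclose : Rabs (f x - f x0) < f x0 / 2).
    { apply (Hd x). split; [split |]; auto. exact I. }
    apply Rabs_def2 in Hclose. lra. }
  assert (Hsplit : RInt f a b = RInt f a c + RInt f c d + RInt f d b).
  { rewrite <- (RInt_Chasles f a c b), <- (RInt_Chasles f c d b);
      try apply ex_RInt_continuous_R; auto.
    unfold plus; simpl. ring. }
  assert (0 <= RInt f a c)
    by (apply RInt_ge_0; [lra | apply ex_RInt_continuous_R; auto | intros; apply Hpos; lra]).
  assert (0 <= RInt f d b)
    by (apply RInt_ge_0; [lra | apply ex_RInt_continuous_R; auto | intros; apply Hpos; lra]).
  lra.
Qed.

Lemma continuous_R_left_limit h : continuous_R h -> (forall x, 0 <= x < 1 -> h x = 0) -> h 1 = 0.
Proof.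
  intros Hc Hz. destruct (Req_dec (h 1) 0) as [| Hne]; auto. exfalso.
  assert (Hcont : continuity_pt h 1) by (apply continuity_pt_filterlim, Hc).
  destruct (Hcont (Rabs (h 1))) as [del [Hdel Hd]]; [apply Rabs_pos_lt; auto |].
  set (x := Rmax 0 (1 - del / 2)).
  assert (Hx : 0 <= x < 1 /\ Rabs (x - 1) < del)
    by (unfold x, Rmax; destruct Rle_dec; split; try lra; apply Rabs_def1; lra).
  assert (Hclose : Rabs (h x - h 1) < Rabs (h 1)).
  { apply (Hd x). split; [split; [exact I |] | apply Hx]. intros E. rewrite E in Hx. lra. }
  rewrite Hz, Rminus_0_l, Rabs_Ropp in Hclose by apply Hx. lra.
Qed.

(* Finite sums of products [u r * w s] of continuous functions: enough joint regularity
   for [intT] to be an iterated Riemann integral with continuous integrands. *)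
Definition separable (F : R -> R -> R) : Prop :=
  exists L : list ((R -> R) * (R -> R)),
    (forall p, In p L -> continuous_R (fst p) /\ continuous_R (snd p)) /\
    forall r s, F r s = msum L (fun p => fst p r * snd p s).

Lemma separable_ext F G : (forall r s, F r s = G r s) -> separable F -> separable G.
Proof. intros E [L [HL EL]]. exists L. split; auto. intros; rewrite <- E; auto. Qed.

Lemma separable_tensor u w : continuous_R u -> continuous_R w -> separable (fun r s => u r * w s).
Proof.
  intros Hu Hw. exists ((u, w) :: nil). split.
  - intros p [<- | []]; auto.
  - intros; simpl; ring.
Qed.

Lemma separable_plus F G : separable F -> separable G -> separable (fun r s => F r s + G r s).
Proof.
  intros [L1 [H1 E1]] [L2 [H2 E2]]. exists (L1 ++ L2). split.
  - intros p Hp. apply in_app_or in Hp. destruct Hp; auto.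
  - intros; rewrite msum_app, E1, E2; auto.
Qed.

Lemma separable_mult F G : separable F -> separable G -> separable (fun r s => F r s * G r s).
Proof.
  intros [L1 [H1 E1]] [L2 [H2 E2]].
  exists (map (fun pq : ((R -> R) * (R -> R)) * ((R -> R) * (R -> R)) =>
     (fun r => fst (fst pq) r * fst (snd pq) r, fun s => snd (fst pq) s * snd (snd pq) s))
     (list_prod L1 L2)).
  split.
  - intros p Hp. apply in_map_iff in Hp. destruct Hp as [[q1 q2] [<- Hq]].
    apply in_prod_iff in Hq. destruct Hq as [Hq1 Hq2].
    destruct (H1 _ Hq1), (H2 _ Hq2). split; apply continuous_R_mult; auto.
  - intros r s. rewrite E1, E2, msum_mul, msum_map. apply msum_ext; intros; simpl; ring.
Qed.

Lemma separable_scal c F : separable F -> separable (fun r s => c * F r s).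
Proof.
  intros HF. apply separable_mult; auto.
  apply (separable_ext (fun r s => c * 1)); [intros; ring |].
  apply separable_tensor; apply continuous_R_const.
Qed.

Lemma separable_msum {I} (l : list I) F : (forall i, In i l -> separable (F i)) ->
  separable (fun r s => msum l (fun i => F i r s)).
Proof.
  induction l; simpl; intros H.
  - exists nil. split; [intros p [] | reflexivity].
  - apply separable_plus; auto.
Qed.

Lemma separable_continuous_s F r : separable F -> continuous_R (F r).
Proof.
  intros [L [HL E]]. apply (continuous_R_ext (fun s => msum L (fun p => fst p r * snd p s))).
  - intros; rewrite E; auto.
  - apply (continuous_R_msum L (fun p s => fst p r * snd p s)). intros p Hp.
    apply continuous_R_mult; [apply continuous_R_const | apply HL; auto].
Qed.

Lemma separable_continuous_r F s : separable F -> continuous_R (fun r => F r s).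
Proof.
  intros [L [HL E]]. apply (continuous_R_ext (fun r => msum L (fun p => fst p r * snd p s))).
  - intros; rewrite E; auto.
  - apply (continuous_R_msum L (fun p r => fst p r * snd p s)). intros p Hp.
    apply continuous_R_mult; [apply HL; auto | apply continuous_R_const].
Qed.

Lemma separable_continuous_slice F : separable F -> continuous_R (fun r => RInt (F r) 0 (1 - r)).
Proof.
  intros HF. pose proof HF as [L [HL E]].
  apply (continuous_R_ext (fun r => msum L (fun p => fst p r * RInt (snd p) 0 (1 - r)))).
  - intros r. rewrite <- (RInt_ext (fun s => msum L (fun p => fst p r * snd p s)))
      by (intros; symmetry; apply E).
    rewrite RInt_msum.
    + apply msum_ext; intros p Hp. symmetry; apply RInt_scal_l, HL; auto.
    + intros p Hp. apply continuous_R_mult; [apply continuous_R_const | apply HL; auto].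
  - apply (continuous_R_msum L (fun p r => fst p r * RInt (snd p) 0 (1 - r))). intros p Hp.
    apply continuous_R_mult; [apply HL; auto | apply continuous_R_RInt_upper, HL; auto].
Qed.

Definition in_T (r s : R) : Prop := 0 <= r /\ 0 <= s /\ r + s <= 1.

Lemma intT_RInt F : separable F -> intT F = RInt (fun r => RInt (F r) 0 (1 - r)) 0 1.
Proof.
  intros HF. unfold intT.
  replace (fun r => Rint (fun s => F r s) 0 (1 - r)) with (fun r => RInt (F r) 0 (1 - r)).
  - apply Rint_continuous, separable_continuous_slice, HF.
  - apply functional_extensionality; intros r. symmetry.
    apply Rint_continuous, separable_continuous_s, HF.
Qed.

Lemma intT_ext F G : (forall r s, F r s = G r s) -> intT F = intT G.
Proof.
  intros E. replace F with G; [reflexivity |].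
  do 2 (apply functional_extensionality; intros). symmetry; apply E.
Qed.

Lemma intT_ext_in_T F G : (forall r s, in_T r s -> F r s = G r s) -> separable G ->
  intT F = intT G.
Proof.
  intros E HG. rewrite (intT_RInt G) by auto. unfold intT.
  apply Rint_ext_on; [lra | | apply ex_RInt_continuous_R, separable_continuous_slice, HG].
  intros r Hr. apply Rint_ext_on; [lra | | apply ex_RInt_continuous_R, separable_continuous_s, HG].
  intros s Hs. apply E. unfold in_T; lra.
Qed.

Lemma intT_plus F G : separable F -> separable G ->
  intT (fun r s => F r s + G r s) = intT F + intT G.
Proof.
  intros HF HG. rewrite !intT_RInt by (auto using separable_plus).
  transitivity (RInt (fun r => RInt (F r) 0 (1 - r) + RInt (G r) 0 (1 - r)) 0 1).
  - apply RInt_ext; intros r _. apply (RInt_plus (F r) (G r));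
      apply ex_RInt_continuous_R, separable_continuous_s; auto.
  - apply (RInt_plus (fun r => RInt (F r) 0 (1 - r)) (fun r => RInt (G r) 0 (1 - r)));
      apply ex_RInt_continuous_R, separable_continuous_slice; auto.
Qed.

Lemma intT_scal c F : separable F -> intT (fun r s => c * F r s) = c * intT F.
Proof.
  intros HF. rewrite !intT_RInt by (auto using separable_scal).
  rewrite <- RInt_scal_l by (apply separable_continuous_slice; auto).
  apply RInt_ext; intros r _. apply RInt_scal_l, separable_continuous_s, HF.
Qed.

Lemma intT_msum {I} (l : list I) F : (forall i, In i l -> separable (F i)) ->
  intT (fun r s => msum l (fun i => F i r s)) = msum l (fun i => intT (F i)).
Proof.
  induction l; simpl; intros H.
  - rewrite <- (intT_ext (fun r s => 0 * 0)) by (intros; ring).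
    rewrite intT_scal; [ring |]. apply (separable_ext (fun r s => 0 * 0)); [intros; ring |].
    apply separable_tensor; apply continuous_R_const.
  - rewrite intT_plus, IHl; auto. apply separable_msum; auto.
Qed.

Lemma intT_nonneg_eq0 F : separable F -> (forall r s, in_T r s -> 0 <= F r s) -> intT F = 0 ->
  forall r s, in_T r s -> F r s = 0.
Proof.
  intros HF Hpos HI.
  rewrite intT_RInt in HI by auto.
  assert (Hslice : forall r, 0 <= r <= 1 -> RInt (F r) 0 (1 - r) = 0).
  { apply (RInt_nonneg_eq0 (fun r => RInt (F r) 0 (1 - r))); auto;
      [apply separable_continuous_slice; auto | lra |].
    intros r Hr. apply RInt_ge_0; [lra | apply ex_RInt_continuous_R, separable_continuous_s; auto |].
    intros s Hs. apply Hpos. unfold in_T; lra. }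
  assert (Hlt : forall r s, 0 <= r < 1 -> 0 <= s <= 1 - r -> F r s = 0).
  { intros r s Hr Hs. apply (RInt_nonneg_eq0 (F r) 0 (1 - r)); auto;
      [apply separable_continuous_s; auto | lra | | apply Hslice; lra].
    intros; apply Hpos; unfold in_T; lra. }
  intros r s [H1 [H2 H3]]. destruct (Req_dec r 1) as [-> | Hne].
  - replace s with 0 by lra. apply (continuous_R_left_limit (fun r => F r 0)).
    + apply separable_continuous_r; auto.
    + intros; apply Hlt; lra.
  - apply Hlt; lra.
Qed.

Lemma intW_tensor2 F A B a b :
  separable A -> separable B -> continuous_R a -> continuous_R b ->
  (forall r s t, in_T r s -> 0 <= t <= 1 -> F r s t = A r s * a t + B r s * b t) ->
  intW F = intT A * RInt a 0 1 + intT B * RInt b 0 1.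
Proof.
  intros HA HB Ha Hb HF.
  change (intT (fun r s => Rint (F r s) 0 1) = intT A * RInt a 0 1 + intT B * RInt b 0 1).
  rewrite (intT_ext_in_T _ (fun r s => RInt a 0 1 * A r s + RInt b 0 1 * B r s)).
  - rewrite intT_plus, !intT_scal by (auto using separable_scal). ring.
  - intros r s Hrs.
    rewrite (Rint_ext_on (fun t => A r s * a t + B r s * b t)); [| lra | auto |].
    + transitivity (RInt (fun t => A r s * a t) 0 1 + RInt (fun t => B r s * b t) 0 1).
      * apply (RInt_plus (fun t => A r s * a t) (fun t => B r s * b t));
          apply ex_RInt_continuous_R, continuous_R_mult; auto using continuous_R_const.
      * rewrite !RInt_scal_l by auto. ring.
    + apply ex_RInt_continuous_R, continuous_R_plus;
        apply continuous_R_mult; auto using continuous_R_const.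
  - apply separable_plus; apply separable_scal; auto.
Qed.

Lemma intW_tensor F A a : separable A -> continuous_R a ->
  (forall r s t, in_T r s -> 0 <= t <= 1 -> F r s t = A r s * a t) ->
  intW F = intT A * RInt a 0 1.
Proof.
  intros HA Ha HF. rewrite (intW_tensor2 F A A a (fun _ => 0)); auto using continuous_R_const.
  - rewrite RInt_const. unfold scal; simpl; unfold mult; simpl. ring.
  - intros. rewrite HF by auto. ring.
Qed.

Lemma sum_f_R0_zero (f : nat -> R) n : (forall i, (i <= n)%nat -> f i = 0) -> sum_f_R0 f n = 0.
Proof. intros H. rewrite (sum_eq f (fun _ => 0)), sum_cte; auto. ring. Qed.

Lemma sum_f_R0_delta (x : R) k n : (k <= n)%nat ->
  sum_f_R0 (fun i => if Nat.eq_dec i k then x else 0) n = x.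
Proof.
  induction n; intros Hk.
  - destruct k; [reflexivity | lia].
  - rewrite tech5. destruct (Nat.eq_dec (S n) k) as [<- | ne].
    + rewrite sum_f_R0_zero; [ring |]. intros i Hi. destruct Nat.eq_dec; [lia | auto].
    + rewrite IHn by lia. ring.
Qed.

Lemma derivable_pt_lim_sum_f_R0 (F : nat -> R -> R) (l : nat -> R) x n :
  (forall i, (i <= n)%nat -> derivable_pt_lim (F i) x (l i)) ->
  derivable_pt_lim (fun u => sum_f_R0 (fun i => F i u) n) x (sum_f_R0 l n).
Proof.
  induction n; simpl; intros H; [apply H; lia |].
  apply (derivable_pt_lim_plus (fun u => sum_f_R0 (fun i => F i u) n) (F (S n))); auto.
Qed.

Lemma is_polyN_ext N f g : (forall r s, f r s = g r s) -> is_polyN N f -> is_polyN N g.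
Proof. intros E [c H]. exists c. intros; rewrite <- E; auto. Qed.

Lemma is_polyN_zero N : is_polyN N (fun _ _ => 0).
Proof.
  exists (fun _ _ => 0). intros. symmetry.
  apply sum_f_R0_zero; intros. apply sum_f_R0_zero; intros. ring.
Qed.

Lemma is_polyN_plus N f g : is_polyN N f -> is_polyN N g -> is_polyN N (fun r s => f r s + g r s).
Proof.
  intros [c1 E1] [c2 E2]. exists (fun a b => c1 a b + c2 a b). intros r s.
  rewrite E1, E2, <- plus_sum. apply sum_eq; intros.
  rewrite <- plus_sum. apply sum_eq; intros. ring.
Qed.

Lemma is_polyN_scal N k f : is_polyN N f -> is_polyN N (fun r s => k * f r s).
Proof.
  intros [c E]. exists (fun a b => k * c a b). intros r s; cbv beta.
  rewrite E, scal_sum. apply sum_eq; intros.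
  rewrite Rmult_comm, scal_sum. apply sum_eq; intros. ring.
Qed.

Lemma is_polyN_sum_f_R0 N n (F : nat -> R -> R -> R) :
  (forall i, (i <= n)%nat -> is_polyN N (F i)) ->
  is_polyN N (fun r s => sum_f_R0 (fun i => F i r s) n).
Proof.
  induction n; simpl; intros H; [apply H; lia |].
  apply (is_polyN_plus N (fun r s => sum_f_R0 (fun i => F i r s) n)); auto.
Qed.

Lemma is_polyN_msum {I} N (l : list I) (F : I -> R -> R -> R) :
  (forall i, In i l -> is_polyN N (F i)) -> is_polyN N (fun r s => msum l (fun i => F i r s)).
Proof.
  induction l; simpl; intros H; [apply is_polyN_zero |].
  apply (is_polyN_plus N (F a)); auto.
Qed.

Lemma is_polyN_monomial N a b : (a + b <= N)%nat -> is_polyN N (fun r s => r ^ a * s ^ b).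
Proof.
  intros Hab.
  exists (fun a' b' => if Nat.eq_dec a' a then if Nat.eq_dec b' b then 1 else 0 else 0).
  intros r s. symmetry.
  rewrite (sum_eq _ (fun a' => if Nat.eq_dec a' a then r ^ a * s ^ b else 0));
    [apply sum_f_R0_delta; lia |].
  intros a' Ha'. destruct (Nat.eq_dec a' a) as [-> | ne].
  - rewrite (sum_eq _ (fun b' => if Nat.eq_dec b' b then r ^ a * s ^ b else 0));
      [apply sum_f_R0_delta; lia |].
    intros b' _. destruct Nat.eq_dec; [subst |]; ring.
  - apply sum_f_R0_zero; intros; ring.
Qed.

Lemma is_polyN_deriv_r N f : is_polyN N f ->
  is_polyN N (fun r s => deriv (fun u => f u s) r) /\
  forall r s, derivable_pt_lim (fun u => f u s) r (deriv (fun u => f u s) r).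
Proof.
  intros [c E].
  set (g r s := sum_f_R0 (fun a => sum_f_R0 (fun b =>
                  c a b * (INR a * r ^ pred a) * s ^ b) (N - a)) N).
  assert (Hg : forall r s, derivable_pt_lim (fun u => f u s) r (g r s)).
  { intros r s.
    apply (derivable_pt_lim_ext (fun u => sum_f_R0 (fun a => sum_f_R0 (fun b =>
             c a b * u ^ a * s ^ b) (N - a)) N)); [intros; rewrite E; auto |].
    apply (derivable_pt_lim_sum_f_R0 (fun a u => sum_f_R0 (fun b => c a b * u ^ a * s ^ b) (N - a))).
    intros a _. apply (derivable_pt_lim_sum_f_R0 (fun b u => c a b * u ^ a * s ^ b)).
    intros b _. apply is_derive_Reals. auto_derive; [auto | ring]. }
  assert (Eg : forall r s, deriv (fun u => f u s) r = g r s) by (intros; apply deriv_unique, Hg).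
  split; [| intros; rewrite Eg; apply Hg].
  apply (is_polyN_ext N g); [intros; symmetry; apply Eg |].
  apply is_polyN_sum_f_R0; intros a Ha. apply is_polyN_sum_f_R0; intros b Hb.
  destruct a as [| a].
  - apply (is_polyN_ext N (fun _ _ => 0)); [intros; simpl; ring | apply is_polyN_zero].
  - apply (is_polyN_ext N (fun r s => (c (S a) b * INR (S a)) * (r ^ a * s ^ b)));
      [intros; simpl; ring |].
    apply is_polyN_scal, is_polyN_monomial. lia.
Qed.

Lemma is_polyN_deriv_s N f : is_polyN N f ->
  is_polyN N (fun r s => deriv (fun u => f r u) s) /\
  forall r s, derivable_pt_lim (fun u => f r u) s (deriv (fun u => f r u) s).
Proof.
  intros [c E].
  set (g r s := sum_f_R0 (fun a => sum_f_R0 (fun b =>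
                  c a b * r ^ a * (INR b * s ^ pred b)) (N - a)) N).
  assert (Hg : forall r s, derivable_pt_lim (fun u => f r u) s (g r s)).
  { intros r s.
    apply (derivable_pt_lim_ext (fun u => sum_f_R0 (fun a => sum_f_R0 (fun b =>
             c a b * r ^ a * u ^ b) (N - a)) N)); [intros; rewrite E; auto |].
    apply (derivable_pt_lim_sum_f_R0 (fun a u => sum_f_R0 (fun b => c a b * r ^ a * u ^ b) (N - a))).
    intros a _. apply (derivable_pt_lim_sum_f_R0 (fun b u => c a b * r ^ a * u ^ b)).
    intros b _. apply is_derive_Reals. auto_derive; [auto | ring]. }
  assert (Eg : forall r s, deriv (fun u => f r u) s = g r s) by (intros; apply deriv_unique, Hg).
  split; [| intros; rewrite Eg; apply Hg].
  apply (is_polyN_ext N g); [intros; symmetry; apply Eg |].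
  apply is_polyN_sum_f_R0; intros a Ha. apply is_polyN_sum_f_R0; intros b Hb.
  destruct b as [| b].
  - apply (is_polyN_ext N (fun _ _ => 0)); [intros; simpl; ring | apply is_polyN_zero].
  - apply (is_polyN_ext N (fun r s => (c a (S b) * INR (S b)) * (r ^ a * s ^ b)));
      [intros; simpl; ring |].
    apply is_polyN_scal, is_polyN_monomial. lia.
Qed.

Lemma is_polyN_separable N f : is_polyN N f -> separable f.
Proof.
  intros [c E].
  apply (separable_ext (fun r s => sum_f_R0 (fun a => sum_f_R0 (fun b =>
           c a b * r ^ a * s ^ b) (N - a)) N)); [intros; rewrite E; auto |].
  assert (Hsum : forall n F, (forall i, (i <= n)%nat -> separable (F i)) ->
            separable (fun r s => sum_f_R0 (fun i => F i r s) n)).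
  { induction n; simpl; intros F H; [apply H; lia |].
    apply (separable_plus (fun r s => sum_f_R0 (fun i => F i r s) n)); auto. }
  apply Hsum; intros a _. apply Hsum; intros b _.
  apply (separable_tensor (fun r => c a b * r ^ a) (fun s => s ^ b)).
  - apply continuous_R_mult; [apply continuous_R_const | apply continuous_R_pow, continuous_R_id].
  - apply continuous_R_pow, continuous_R_id.
Qed.

Definition nodes_injective (N : nat) (tn : nat -> R) : Prop :=
  forall a b, (a <= N)%nat -> (b <= N)%nat -> tn a = tn b -> a = b.

Lemma increasing_nodes_le N tn : (forall j, (j < N)%nat -> tn j < tn (S j)) ->
  forall a b, (a <= b)%nat -> (b <= N)%nat -> tn a <= tn b.
Proof.
  intros H a b Hab. induction Hab; intros HbN; [lra |].
  apply Rle_trans with (tn m); [apply IHHab; lia | left; apply H; lia].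
Qed.

Lemma increasing_nodes_injective N tn : (forall j, (j < N)%nat -> tn j < tn (S j)) ->
  nodes_injective N tn.
Proof.
  intros H a b Ha Hb E.
  assert (Hlt : forall a b, (a < b)%nat -> (b <= N)%nat -> tn a < tn b).
  { intros a' b' Hab Hb'. apply Rlt_le_trans with (tn (S a')); [apply H; lia |].
    apply (increasing_nodes_le N); auto; lia. }
  destruct (lt_eq_lt_dec a b) as [[l | e] | l]; auto.
  - specialize (Hlt a b l Hb). lra.
  - specialize (Hlt b a l Ha). lra.
Qed.

Lemma lag1D_node N tn j k : (j <= N)%nat -> (k <= N)%nat -> nodes_injective N tn ->
  lag1D N tn j (tn k) = if Nat.eq_dec j k then 1 else 0.
Proof.
  intros Hj Hk Hinj. unfold lag1D.
  assert (Hl : forall m, In m (seq 0 (S N)) -> (m <= N)%nat)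
    by (intros m Hm; apply in_seq in Hm; lia).
  assert (Hkl : In k (seq 0 (S N))) by (apply in_seq; lia).
  destruct (Nat.eq_dec j k) as [<- | ne].
  - clear Hkl. induction (seq 0 (S N)) as [| m l IH]; simpl in *; [reflexivity |].
    rewrite IH by auto. destruct (Nat.eq_dec m j) as [-> | ne]; [ring |].
    field. intros E. apply ne. apply Hinj; auto. lra.
  - induction (seq 0 (S N)) as [| m l IH]; simpl in *; [contradiction |].
    destruct Hkl as [-> | Hkl].
    + destruct (Nat.eq_dec k j); [congruence |]. unfold Rdiv. ring.
    + rewrite IH by auto. ring.
Qed.

Module MatrixInverse.
Import all_boot all_order all_algebra Rstruct.
Import GRing.Theory.
Local Open Scope ring_scope.

Lemma msum_idx1_big n (f : nat -> R) : msum (idx1 n) f = \sum_(i < n) f i.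
Proof.
  have -> : idx1 n = iota 0 n by rewrite /idx1; elim: n 0%N => [| n IH] m //=; rewrite IH.
  rewrite -(big_mkord xpredT) /index_iota subn0.
  by elim: (iota 0 n) => [| a l IH]; rewrite ?big_nil ?big_cons //= IH.
Qed.

Definition ord_ext {n} (F : 'I_n -> R) (m : nat) : R :=
  if @insub _ (fun m => (m < n)%N) _ m is Some o then F o else 0.

Lemma ord_extE n F (o : 'I_n) : ord_ext F o = F o.
Proof. by rewrite /ord_ext valK. Qed.

Lemma is_inv_of_left_kernel0 (n : nat) (A : nat -> nat -> R) :
  (forall u : nat -> R,
     (forall j, (j < n)%coq_nat -> msum (idx1 n) (fun i => Rmult (u i) (A i j)) = R0) ->
     forall i, (i < n)%coq_nat -> u i = R0) ->
  exists B, is_inv (idx1 n) Nat.eq_dec A B.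
Proof.
  move=> Hker.
  pose Am : 'M[R]_n := \matrix_(i < n, j < n) A i j.
  have Hfree : row_free Am.
    rewrite -kermx_eq0. apply/eqP/row_matrixP => i. rewrite row0.
    have H0 : row i (kermx Am) *m Am = 0 by rewrite -row_mul mulmx_ker row0.
    apply/rowP => k. rewrite [RHS]mxE.
    pose u := ord_ext (fun m => row i (kermx Am) 0 m).
    have Hu (m : 'I_n) : u m = row i (kermx Am) 0 m by rewrite /u ord_extE.
    rewrite -Hu. apply: Hker; last by apply/ltP.
    move=> j /ltP Hj. rewrite msum_idx1_big.
    transitivity ((row i (kermx Am) *m Am) 0 (Ordinal Hj)); last by rewrite H0 mxE.
    rewrite mxE. apply: eq_bigr => m _. by rewrite Hu /Am !mxE.
  have Hunit : Am \in unitmx by rewrite -row_free_unit.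
  pose B (i j : nat) := ord_ext (fun o => ord_ext (fun o' => invmx Am o o') j) i.
  have HB (i j : 'I_n) : B i j = invmx Am i j by rewrite /B !ord_extE.
  exists B => i k Hi Hk.
  have lt_of_In m : In m (idx1 n) -> (m < n)%N by move=> /In_idx1 /ltP.
  pose io := Ordinal (lt_of_In _ Hi). pose ko := Ordinal (lt_of_In _ Hk).
  have Eid : idm Nat.eq_dec i k = (1%:M : 'M[R]_n) io ko.
    rewrite /idm mxE. case: Nat.eq_dec => [E | ne].
      have -> : io = ko by apply: val_inj; exact E.
      by rewrite eqxx.
    case: eqP => // /(congr1 val) E. by case: ne.
  split.
  - rewrite Eid -(mulmxV Hunit) mxE /mmul msum_idx1_big. apply: eq_bigr => j _.
    change (A (nat_of_ord io) j * B j (nat_of_ord ko) = Am io j * invmx Am j ko).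
    by rewrite HB /Am mxE.
  - rewrite Eid -(mulVmx Hunit) mxE /mmul msum_idx1_big. apply: eq_bigr => j _.
    change (B (nat_of_ord io) j * A j (nat_of_ord ko) = invmx Am io j * Am j ko).
    by rewrite HB /Am mxE.
Qed.

End MatrixInverse.
Import MatrixInverse.

Module LagrangeInterpolation.
Import all_boot all_order all_algebra Rstruct zify.
Import GRing.Theory.
Local Open Scope ring_scope.

Lemma horner_derivable (p : {poly R}) t : derivable_pt_lim (fun x => p.[x]) t (p^`()).[t].
Proof.
  elim/poly_ind: p => [| p c IH].
  - rewrite deriv0 hornerC. apply: (derivable_pt_lim_ext (fun _ => 0%R)).
      by move=> x; rewrite hornerC.
    exact: derivable_pt_lim_const.
  - rewrite derivMXaddC hornerD hornerMX.
    apply: (derivable_pt_lim_ext (fun x => Rplus (Rmult p.[x] x) c)).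
      by move=> x; rewrite hornerMXaddC.
    have -> : p.[t] + p^`().[t] * t = Rplus (Rplus (Rmult (p^`()).[t] t) (Rmult p.[t] 1)) 0%R.
      by rewrite /GRing.add /GRing.mul /= Rplus_0_r Rmult_1_r Rplus_comm.
    apply: derivable_pt_lim_plus; last exact: derivable_pt_lim_const.
    apply: (derivable_pt_lim_mult (fun x => p.[x]) (fun x => x)) => //.
    exact: derivable_pt_lim_id.
Qed.

Definition lagrange_factor (tn : nat -> R) (j m : nat) : {poly R} :=
  if m == j then 1 else ('X - (tn m)%:P) * (Rinv (Rminus (tn j) (tn m)))%:P.

Definition lagrange_poly N tn j : {poly R} := \prod_(m <- iota 0 N.+1) lagrange_factor tn j m.

Lemma lag1D_horner N tn j t : lag1D N tn j t = (lagrange_poly N tn j).[t].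
Proof.
  rewrite /lag1D /lagrange_poly.
  have -> : List.seq 0 N.+1 = iota 0 N.+1 by elim: N.+1 0%N => [| n IH] m //=; rewrite IH.
  elim: (iota 0 N.+1) => [| a l IH] /=.
  - by rewrite big_nil hornerC.
  - rewrite big_cons hornerM IH /lagrange_factor. case: Nat.eq_dec => [-> | ne].
    + by rewrite eqxx hornerC.
    + case: eqP => // _. by rewrite hornerM hornerXsubC hornerC.
Qed.

Lemma size_lagrange_poly N tn j : (j <= N)%N -> (size (lagrange_poly N tn j) <= N.+1)%N.
Proof.
  move=> Hj.
  have Hsize (l : seq nat) :
      (size (\prod_(m <- l) lagrange_factor tn j m)%R <= 1 + count (fun m : nat => m != j) l)%N.
    elim: l => [| a l IH]; first by rewrite big_nil size_poly1.
    rewrite big_cons /=. apply: leq_trans (size_polyMleq _ _) _.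
    rewrite {1}/lagrange_factor /=. case: (eqVneq a j) => [_ | _].
    + rewrite size_poly1 /=. move: IH. set y := size _. lia.
    + have Hfac : (size (('X - (tn a)%:P) * (Rinv (Rminus (tn j) (tn a)))%:P)%R <= 2)%N.
        apply: leq_trans (size_polyMleq _ _) _. rewrite size_XsubC.
        have := size_polyC_leq1 (Rinv (Rminus (tn j) (tn a))). set z := size _. lia.
      move: IH Hfac. set y := size (_ : {poly R}). set z := size (_ : {poly R}). lia.
  apply: leq_trans (Hsize _) _.
  have Hc := count_predC (pred1 j) (iota 0 N.+1).
  have Hm : count (pred1 j) (iota 0 N.+1) = 1%N.
    by rewrite (count_uniq_mem _ (iota_uniq 0 N.+1)) mem_iota add0n ltnS Hj.
  rewrite size_iota Hm in Hc.
  have -> : count (fun m => m != j) (iota 0 N.+1) = count (predC (pred1 j)) (iota 0 N.+1) by [].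
  lia.
Qed.

Lemma lag1D_derivable N tn j t : derivable_pt_lim (lag1D N tn j) t (Defs.deriv (lag1D N tn j) t).
Proof.
  have Hd : derivable_pt_lim (lag1D N tn j) t ((lagrange_poly N tn j)^`()).[t].
    apply: (derivable_pt_lim_ext (fun x => (lagrange_poly N tn j).[x])).
      by move=> x; rewrite lag1D_horner.
    exact: horner_derivable.
  by rewrite (deriv_unique _ _ _ Hd).
Qed.

Lemma deriv_lag1D_horner N tn j t : Defs.deriv (lag1D N tn j) t = ((lagrange_poly N tn j)^`()).[t].
Proof.
  apply: deriv_unique. apply: (derivable_pt_lim_ext (fun x => (lagrange_poly N tn j).[x])).
    by move=> x; rewrite lag1D_horner.
  exact: horner_derivable.
Qed.

Lemma deriv_lag1D_derivable N tn j t :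
  exists l, derivable_pt_lim (fun x => Defs.deriv (lag1D N tn j) x) t l.
Proof.
  exists ((lagrange_poly N tn j)^`()^`()).[t].
  apply: (derivable_pt_lim_ext (fun x => ((lagrange_poly N tn j)^`()).[x])).
    by move=> x; rewrite deriv_lag1D_horner.
  exact: horner_derivable.
Qed.

Lemma poly_eq0_at_nodes N tn (p : {poly R}) : nodes_injective N tn -> (size p <= N.+1)%N ->
  (forall k, (k <= N)%N -> p.[tn k] = 0) -> p = 0.
Proof.
  move=> Hinj Hs Hz. apply/eqP; apply/negPn/negP => Hp.
  have := max_poly_roots Hp (rs := map tn (iota 0 N.+1)).
  rewrite size_map size_iota.
  have -> : all (root p) (map tn (iota 0 N.+1)).
    apply/allP => x /mapP [k Hk ->]. apply/rootP. apply: Hz. by move: Hk; rewrite mem_iota.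
  have -> : uniq (map tn (iota 0 N.+1)).
    rewrite map_inj_in_uniq ?iota_uniq // => a b Ha Hb E.
    move: Ha Hb; rewrite !mem_iota !add0n !ltnS => Ha Hb.
    by apply: Hinj => //; apply/leP.
  move=> /(_ isT isT). move: Hs. set z := size p. lia.
Qed.

Lemma poly_lag1D_interp N tn (q : {poly R}) : nodes_injective N tn -> (size q <= N.+1)%N ->
  forall t, q.[t] = msum (idx1 N.+1) (fun k => Rmult q.[tn k] (lag1D N tn k t)).
Proof.
  move=> Hinj Hs.
  pose P := q - \sum_(k < N.+1) q.[tn k] *: lagrange_poly N tn k.
  have HP : P = 0.
    apply: (@poly_eq0_at_nodes N tn P Hinj).
    - rewrite /P. apply: leq_trans (size_polyD _ _) _. rewrite geq_max Hs /= size_polyN.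
      apply: (big_ind (fun p : {poly R} => size p <= N.+1)%N); first by rewrite size_poly0.
        move=> x y Hx Hy. apply: leq_trans (size_polyD _ _) _. by rewrite geq_max Hx Hy.
      move=> i _. apply: leq_trans (size_scale_leq _ _) _. apply: size_lagrange_poly.
      by rewrite -ltnS.
    - move=> k Hk. rewrite /P hornerD hornerN horner_sum.
      have -> : \sum_(i < N.+1) (q.[tn i] *: lagrange_poly N tn i).[tn k] = q.[tn k].
        rewrite -(msum_idx1_big N.+1 (fun i => (q.[tn i] *: lagrange_poly N tn i).[tn k])).
        rewrite -(msum_delta_r Nat.eq_dec (idx1 N.+1) k (fun i => q.[tn i])); first last.
        + by apply/In_idx1/ltP.
        + exact: NoDup_idx1.
        apply: msum_ext => i /In_idx1 /ltP Hi. rewrite hornerZ -lag1D_horner lag1D_node //.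
        + lia.
        + move: Hk. lia.
      by rewrite subrr.
  move=> t. have : P.[t] = 0 by rewrite HP hornerC.
  rewrite /P hornerD hornerN horner_sum => /eqP. rewrite subr_eq0 => /eqP ->.
  rewrite msum_idx1_big. apply: eq_bigr => i _. by rewrite hornerZ -lag1D_horner.
Qed.

(* [(al + be t) l_j'(t)] has degree [<= N], so it equals its own interpolant. *)
Lemma affine_deriv_lag1D_interp N tn (al be : R) j : nodes_injective N tn -> (j <= N)%coq_nat ->
  forall t, Rmult (Rplus al (Rmult be t)) (Defs.deriv (lag1D N tn j) t) =
    msum (idx1 N.+1) (fun k => Rmult (Rmult (Rplus al (Rmult be (tn k)))
                                            (Defs.deriv (lag1D N tn j) (tn k))) (lag1D N tn k t)).
Proof.
  move=> Hinj /leP Hj t.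
  pose q := (al%:P + be *: 'X) * (lagrange_poly N tn j)^`().
  have Hq x : q.[x] = Rmult (Rplus al (Rmult be x)) (Defs.deriv (lag1D N tn j) x).
    by rewrite /q hornerM hornerD hornerC hornerZ hornerX deriv_lag1D_horner.
  rewrite -Hq (@poly_lag1D_interp N tn q Hinj); first by apply: msum_ext => k _; rewrite Hq.
  rewrite /q. apply: leq_trans (size_polyMleq _ _) _.
  have H1 : (size (al%:P + be *: 'X : {poly R})%R <= 2)%N.
    apply: leq_trans (size_polyD _ _) _. rewrite geq_max. apply/andP; split.
      exact: leq_trans (size_polyC_leq1 _) _.
    apply: leq_trans (size_scale_leq _ _) _. by rewrite size_polyX.
  have H2 : (size (lagrange_poly N tn j)^`()%R <= N)%N.
    have := size_lagrange_poly N tn j Hj. case: (eqVneq (lagrange_poly N tn j) 0) => [-> | Hnz].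
      by rewrite deriv0 size_poly0.
    have := lt_size_deriv Hnz. set a := size _. set b := size _. lia.
  move: H1 H2. set a := size _. set b := size _. lia.
Qed.

End LagrangeInterpolation.
Import LagrangeInterpolation.

Lemma msum_quadratic_form {I} (l : list I) (u : I -> R) (A : I -> I -> R) :
  msum l (fun j => u j * msum l (fun i => u i * A i j)) =
  msum l (fun j => msum l (fun i => u i * u j * A i j)).
Proof. apply msum_ext; intros. rewrite <- msum_scal_l. apply msum_ext; intros; ring. Qed.

Lemma msum_nodal_delta n (u : nat -> R) (phi : nat -> R) k : (k < n)%nat ->
  (forall i, (i < n)%nat -> phi i = if Nat.eq_dec i k then 1 else 0) ->
  msum (idx1 n) (fun i => u i * phi i) = u k.
Proof.
  intros Hk Hphi. rewrite <- (msum_delta_r Nat.eq_dec (idx1 n) k u).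
  - apply msum_ext; intros i Hi. rewrite Hphi; auto. apply In_idx1; auto.
  - apply NoDup_idx1.
  - apply In_idx1; auto.
Qed.

(* If [u A = 0] then [u A u^T = 0] is the weighted integral of [(sum_i u_i phi_i)^2],
   which therefore vanishes at the nodes, where it equals [u_k]. *)
Lemma gram_triangle_invertible (n : nat) (phi : nat -> R -> R -> R) (w : R -> R -> R)
  (pr ps : nat -> R) :
  (forall i, (i < n)%nat -> separable (phi i)) -> separable w ->
  (forall r s, in_T r s -> 0 < w r s) ->
  (forall k, (k < n)%nat -> in_T (pr k) (ps k)) ->
  (forall i k, (i < n)%nat -> (k < n)%nat -> phi i (pr k) (ps k) = if Nat.eq_dec i k then 1 else 0) ->
  exists B, is_inv (idx1 n) Nat.eq_dec (fun i j => intT (fun r s => phi i r s * phi j r s * w r s)) B.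
Proof.
  intros Hphi Hw Hwpos Hnodes Hdelta. apply is_inv_of_left_kernel0. intros u Hu.
  assert (Hphi' : forall i, In i (idx1 n) -> separable (phi i)) by (intros; apply Hphi, In_idx1; auto).
  set (p r s := msum (idx1 n) (fun i => u i * phi i r s)).
  assert (Hp : separable p) by (apply separable_msum; intros; apply separable_scal; auto).
  assert (Hp2 : separable (fun r s => p r s * p r s * w r s))
    by (repeat apply separable_mult; auto).
  assert (Hterm : forall i j, In i (idx1 n) -> In j (idx1 n) ->
            separable (fun r s => u i * u j * (phi i r s * phi j r s * w r s)))
    by (intros; apply separable_scal; repeat apply separable_mult; auto).
  assert (HI : intT (fun r s => p r s * p r s * w r s) = 0).
  { transitivity (msum (idx1 n) (fun j => u j * msum (idx1 n) (fun i =>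
                    u i * intT (fun r s => phi i r s * phi j r s * w r s)))).
    - rewrite msum_quadratic_form.
      rewrite (intT_ext _ (fun r s => msum (idx1 n) (fun j => msum (idx1 n) (fun i =>
                 u i * u j * (phi i r s * phi j r s * w r s))))).
      + rewrite intT_msum by (intros; apply separable_msum; auto).
        apply msum_ext; intros j Hj. rewrite intT_msum by auto.
        apply msum_ext; intros i Hi. apply intT_scal. repeat apply separable_mult; auto.
      + intros r s.
        transitivity (msum (idx1 n) (fun j => p r s * (u j * phi j r s * w r s)));
          [rewrite msum_scal_l, msum_scal_r; unfold p; ring |].
        apply msum_ext; intros j _. unfold p. rewrite <- msum_scal_r.
        apply msum_ext; intros; ring.
    - apply msum_zero. intros j Hj. rewrite Hu by (apply In_idx1; auto). ring. }
  intros k Hk.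
  assert (Hpk : p (pr k) (ps k) = u k) by (apply msum_nodal_delta; auto).
  assert (Hwk : 0 < w (pr k) (ps k)) by auto.
  assert (E : p (pr k) (ps k) * p (pr k) (ps k) * w (pr k) (ps k) = 0).
  { apply (intT_nonneg_eq0 _ Hp2); auto.
    intros r s Hrs. specialize (Hwpos r s Hrs). nra. }
  rewrite Hpk in E. apply Rmult_integral in E as [E | E]; [| lra].
  destruct (Rmult_integral _ _ E); assumption.
Qed.

Lemma gram_interval_invertible (n : nat) (phi : nat -> R -> R) (tn : nat -> R) :
  (forall i, continuous_R (phi i)) ->
  (forall k, (k < n)%nat -> 0 <= tn k <= 1) ->
  (forall i k, (i < n)%nat -> (k < n)%nat -> phi i (tn k) = if Nat.eq_dec i k then 1 else 0) ->
  exists B, is_inv (idx1 n) Nat.eq_dec (fun i j => RInt (fun t => phi i t * phi j t) 0 1) B.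
Proof.
  intros Hphi Hnodes Hdelta. apply is_inv_of_left_kernel0. intros u Hu.
  set (p t := msum (idx1 n) (fun i => u i * phi i t)).
  assert (Hp : continuous_R p).
  { apply (continuous_R_msum _ (fun i t => u i * phi i t)). intros.
    apply continuous_R_mult; auto. apply continuous_R_const. }
  assert (HI : RInt (fun t => p t * p t) 0 1 = 0).
  { transitivity (msum (idx1 n) (fun j => u j * msum (idx1 n) (fun i =>
                    u i * RInt (fun t => phi i t * phi j t) 0 1))).
    - rewrite msum_quadratic_form.
      rewrite (RInt_ext _ (fun t => msum (idx1 n) (fun j => msum (idx1 n) (fun i =>
                 u i * u j * (phi i t * phi j t))))).
      + rewrite RInt_msum.
        * apply msum_ext; intros j _. rewrite RInt_msum.
          -- apply msum_ext; intros i _. apply RInt_scal_l, continuous_R_mult; auto.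
          -- intros. apply continuous_R_mult; [apply continuous_R_const |].
             apply continuous_R_mult; auto.
        * intros j _. apply (continuous_R_msum _ (fun i t => u i * u j * (phi i t * phi j t))).
          intros. apply continuous_R_mult; [apply continuous_R_const |].
          apply continuous_R_mult; auto.
      + intros t _.
        transitivity (msum (idx1 n) (fun j => p t * (u j * phi j t)));
          [rewrite msum_scal_l; reflexivity |].
        apply msum_ext; intros j _. unfold p. rewrite <- msum_scal_r.
        apply msum_ext; intros; ring.
    - apply msum_zero. intros j Hj. rewrite Hu by (apply In_idx1; auto). ring. }
  intros k Hk.
  assert (Hpk : p (tn k) = u k) by (apply msum_nodal_delta; auto).
  assert (E : p (tn k) * p (tn k) = 0).
  { apply (RInt_nonneg_eq0 (fun t => p t * p t) 0 1); auto.
    - apply continuous_R_mult; auto.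
    - lra.
    - intros; nra. }
  rewrite Hpk in E. destruct (Rmult_integral _ _ E); assumption.
Qed.

Section VerticallyMappedWedge.
Variable nu : nat -> nat -> R.
Hypothesis Hvm : vertically_mapped nu.

Definition dx_dr := nu 2%nat 0%nat - nu 1%nat 0%nat.
Definition dx_ds := nu 3%nat 0%nat - nu 1%nat 0%nat.
Definition dy_dr := nu 2%nat 1%nat - nu 1%nat 1%nat.
Definition dy_ds := nu 3%nat 1%nat - nu 1%nat 1%nat.
Definition dz_dr (t : R) :=
  (nu 2%nat 2%nat - nu 1%nat 2%nat) * (1 - t) + (nu 5%nat 2%nat - nu 4%nat 2%nat) * t.
Definition dz_ds (t : R) :=
  (nu 3%nat 2%nat - nu 1%nat 2%nat) * (1 - t) + (nu 6%nat 2%nat - nu 4%nat 2%nat) * t.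
Definition dz_dt (r s : R) :=
  (nu 4%nat 2%nat - nu 1%nat 2%nat) * (1 - r - s) + (nu 5%nat 2%nat - nu 2%nat 2%nat) * r
  + (nu 6%nat 2%nat - nu 3%nat 2%nat) * s.
Definition hor_det := dx_dr * dy_ds - dx_ds * dy_dr.

Definition wedge_jmat (r s t : R) (c b : nat) : R :=
  match c, b with
  | O, O => dx_dr | O, S O => dx_ds
  | S O, O => dy_dr | S O, S O => dy_ds
  | S (S O), O => dz_dr t | S (S O), S O => dz_ds t | S (S O), S (S O) => dz_dt r s
  | _, _ => 0
  end.

Lemma Jmat_wedge r s t c b : (c < 3)%nat -> (b < 3)%nat -> Jmat nu r s t c b = wedge_jmat r s t c b.
Proof.
  intros Hc Hb. destruct Hvm as [h1 [h2 [h3 [h4 [h5 h6]]]]].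
  destruct c as [| [| [| c]]]; try lia; destruct b as [| [| [| b]]]; try lia;
    unfold Jmat, d_r, d_s, d_t; apply deriv_unique, is_derive_Reals;
    unfold Phi, vfun; auto_derive; auto;
    rewrite <- ?h1, <- ?h2, <- ?h3, <- ?h4, <- ?h5, <- ?h6;
    unfold wedge_jmat, dx_dr, dx_ds, dy_dr, dy_ds, dz_dr, dz_ds, dz_dt; ring.
Qed.

Lemma Jac_wedge r s t : Jac nu r s t = hor_det * dz_dt r s.
Proof.
  unfold Jac, det3. rewrite !Jmat_wedge by lia. unfold wedge_jmat, hor_det. ring.
Qed.

(* The geometric factors: row [b] is the reference variable, column [c] the physical one. *)
Definition wedge_jinv (r s t : R) (b c : nat) : R :=
  match b, c with
  | O, O => dy_ds / hor_det | O, S O => - dx_ds / hor_det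
  | S O, O => - dy_dr / hor_det | S O, S O => dx_dr / hor_det
  | S (S O), O => (dz_ds t * dy_dr - dz_dr t * dy_ds) / (hor_det * dz_dt r s)
  | S (S O), S O => (dz_dr t * dx_ds - dz_ds t * dx_dr) / (hor_det * dz_dt r s)
  | S (S O), S (S O) => / dz_dt r s
  | _, _ => 0
  end.

Lemma gfac_wedge r s t b c : hor_det <> 0 -> dz_dt r s <> 0 -> (b < 3)%nat -> (c < 3)%nat ->
  gfac nu b c r s t = wedge_jinv r s t b c.
Proof.
  intros HD Hz Hb Hc. unfold gfac.
  apply minv_unique; [apply NoDup_idx1 | | apply In_idx1; auto | apply In_idx1; auto].
  apply (is_inv_ext _ _ (wedge_jmat r s t)).
  - intros i k Hi Hk. apply In_idx1 in Hi, Hk. symmetry; apply Jmat_wedge; auto.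
  - intros i k Hi Hk. simpl in Hi, Hk. unfold mmul, idm, wedge_jmat, wedge_jinv, hor_det in *; simpl.
    destruct Hi as [<- | [<- | [<- | []]]]; destruct Hk as [<- | [<- | [<- | []]]];
      simpl; split; field; auto.
Qed.

Hypothesis HJ : forall r s t, in_W r s t -> 0 < Jac nu r s t.

Lemma wedge_nondegenerate r s t : in_W r s t -> hor_det <> 0 /\ dz_dt r s <> 0.
Proof.
  intros HW. specialize (HJ r s t HW). rewrite Jac_wedge in HJ.
  split; intros E; rewrite E in HJ; lra.
Qed.

Lemma gfac_r_const c r s t : (c < 2)%nat -> in_W r s t -> gfac nu 0 c r s t = gfac nu 0 c 0 0 0.
Proof.
  intros Hc HW. assert (HW0 : in_W 0 0 0) by (unfold in_W; lra).
  destruct (wedge_nondegenerate r s t HW), (wedge_nondegenerate 0 0 0 HW0).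
  rewrite !gfac_wedge by (auto; lia). destruct c as [| [| ]]; reflexivity || lia.
Qed.

Lemma gfac_s_const c r s t : (c < 2)%nat -> in_W r s t -> gfac nu 1 c r s t = gfac nu 1 c 0 0 0.
Proof.
  intros Hc HW. assert (HW0 : in_W 0 0 0) by (unfold in_W; lra).
  destruct (wedge_nondegenerate r s t HW), (wedge_nondegenerate 0 0 0 HW0).
  rewrite !gfac_wedge by (auto; lia). destruct c as [| [| ]]; reflexivity || lia.
Qed.

Definition tJ (c : nat) (t : R) : R :=
  match c with
  | O => dz_ds t * dy_dr - dz_dr t * dy_ds
  | _ => dz_dr t * dx_ds - dz_ds t * dx_dr
  end.

Lemma gfac_t_Jac c r s t : (c < 2)%nat -> in_W r s t -> gfac nu 2 c r s t * Jac nu r s t = tJ c t.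
Proof.
  intros Hc HW. destruct (wedge_nondegenerate r s t HW).
  rewrite gfac_wedge, Jac_wedge by (auto; lia).
  destruct c as [| [| ]]; try lia; simpl; field; auto.
Qed.

Lemma tJ_affine c t : tJ c t = tJ c 0 + (tJ c 1 - tJ c 0) * t.
Proof. unfold tJ, dz_dr, dz_ds. destruct c; ring. Qed.

Lemma continuous_R_tJ c : continuous_R (tJ c).
Proof.
  apply (continuous_R_ext (fun t => tJ c 0 + (tJ c 1 - tJ c 0) * t));
    [intros; symmetry; apply tJ_affine |].
  apply continuous_R_plus; [apply continuous_R_const |].
  apply continuous_R_mult; [apply continuous_R_const | apply continuous_R_id].
Qed.

Lemma separable_Jac t : separable (fun r s => Jac nu r s t).
Proof.
  apply (separable_ext (fun r s => hor_det * (nu 4%nat 2%nat - nu 1%nat 2%nat) * (1 * 1)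
    + hor_det * (nu 5%nat 2%nat - nu 2%nat 2%nat - (nu 4%nat 2%nat - nu 1%nat 2%nat)) * (r * 1)
    + hor_det * (nu 6%nat 2%nat - nu 3%nat 2%nat - (nu 4%nat 2%nat - nu 1%nat 2%nat)) * (1 * s))).
  - intros. rewrite Jac_wedge. unfold dz_dt. ring.
  - repeat apply separable_plus; apply separable_scal, separable_tensor;
      auto using continuous_R_const, continuous_R_id.
Qed.

End VerticallyMappedWedge.

Section DifferentiationMatrices.
Variables (N : nat) (nu : nat -> nat -> R).
Hypothesis Hvm : vertically_mapped nu.
Hypothesis HJ : forall r s t, in_W r s t -> 0 < Jac nu r s t.
Variables (pr ps : nat -> R) (ltri : nat -> R -> R -> R) (tn : nat -> R).
Hypothesis Hpts : forall i, (i < Ntri N)%nat -> 0 <= pr i /\ 0 <= ps i /\ pr i + ps i <= 1.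
Hypothesis Huni : forall f, is_polyN N f ->
  (forall i, (i < Ntri N)%nat -> f (pr i) (ps i) = 0) -> forall r s, f r s = 0.
Hypothesis Hlag : forall i, (i < Ntri N)%nat ->
  is_polyN N (ltri i) /\
  forall k, (k < Ntri N)%nat -> ltri i (pr k) (ps k) = if Nat.eq_dec i k then 1 else 0.
Hypothesis HGLL : is_GLL N tn.

Local Notation IT := (idx1 (Ntri N)).
Local Notation I1 := (idx1 (S N)).
Local Notation IW := (idx2 (Ntri N) (S N)).

(* The let-bound objects of [mainTheorem5]: [mass] is M^k, [stiff c] is S^k_x (c = 0) or
   S^k_y (c = 1), and [rhs c] is the claimed value of D^k_x, D^k_y. *)
Definition ell (p : nat * nat) (r s t : R) : R := ltri (fst p) r s * lag1D N tn (snd p) t.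
Definition mass (p q : nat * nat) : R :=
  intW (fun r s t => ell p r s t * ell q r s t * Jac nu r s t).
Definition dphi (c : nat) (q : nat * nat) (r s t : R) : R :=
  gfac nu 0 c r s t * d_r (ell q) r s t + gfac nu 1 c r s t * d_s (ell q) r s t
  + gfac nu 2 c r s t * d_t (ell q) r s t.
Definition stiff (c : nat) (p q : nat * nat) : R :=
  intW (fun r s t => dphi c q r s t * ell p r s t * Jac nu r s t).
Definition Mtri (i i' : nat) : R := intT (fun r s => ltri i r s * ltri i' r s * Jac nu r s 0).
Definition Mhat (i i' : nat) : R := intT (fun r s => ltri i r s * ltri i' r s).
Definition M1D (j j' : nat) : R := RInt (fun t => lag1D N tn j t * lag1D N tn j' t) 0 1.
Definition Dr (i i' : nat) : R := deriv (fun u => ltri i' u (ps i)) (pr i).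
Definition Ds (i i' : nat) : R := deriv (fun u => ltri i' (pr i) u) (ps i).
Definition Dt (j j' : nat) : R := deriv (lag1D N tn j') (tn j).
Definition Ltri : nat -> nat -> R := mmul IT (minv IT Nat.eq_dec Mtri) Mhat.
Definition diagtJ (c j j' : nat) : R :=
  if Nat.eq_dec j j' then gfac nu 2 c 0 0 (tn j) * Jac nu 0 0 (tn j) else 0.
Definition Gtri (c i i' : nat) : R := gfac nu 0 c 0 0 0 * Dr i i' + gfac nu 1 c 0 0 0 * Ds i i'.
Definition rhs (c : nat) (p q : nat * nat) : R :=
  kron (Gtri c) (idm Nat.eq_dec) p q + kron Ltri (mmul I1 (diagtJ c) Dt) p q.

Lemma nodes_injective_tn : nodes_injective N tn.
Proof. destruct HGLL as [_ [_ [H _]]]. apply increasing_nodes_injective, H. Qed.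

Lemma tn_in_unit j : (j <= N)%nat -> 0 <= tn j <= 1.
Proof.
  intros Hj. destruct HGLL as [H0 [H1 [H _]]].
  split; [rewrite <- H0 | rewrite <- H1]; apply (increasing_nodes_le N); auto; lia.
Qed.

Lemma separable_ltri i : (i < Ntri N)%nat -> separable (ltri i).
Proof. intros Hi. apply (is_polyN_separable N), Hlag, Hi. Qed.

Lemma ltri_interp f : is_polyN N f ->
  forall r s, f r s = msum IT (fun k => f (pr k) (ps k) * ltri k r s).
Proof.
  intros Hf r s.
  set (h r s := f r s + -1 * msum IT (fun k => f (pr k) (ps k) * ltri k r s)).
  assert (Hh : is_polyN N h).
  { apply is_polyN_plus, is_polyN_scal; auto.
    apply (is_polyN_msum N _ (fun k r s => f (pr k) (ps k) * ltri k r s)).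
    intros k Hk. apply is_polyN_scal, Hlag, In_idx1, Hk. }
  assert (Hz : forall m, (m < Ntri N)%nat -> h (pr m) (ps m) = 0).
  { intros m Hm. unfold h.
    rewrite (msum_nodal_delta _ (fun k => f (pr k) (ps k)) (fun k => ltri k (pr m) (ps m)) m Hm);
      [ring |].
    intros k Hk. apply Hlag; auto. }
  pose proof (Huni h Hh Hz r s) as E. unfold h in E. lra.
Qed.

Lemma continuous_R_lag1D j : continuous_R (lag1D N tn j).
Proof. apply continuous_R_derivable. intros t. eexists. apply lag1D_derivable. Qed.

Lemma continuous_R_deriv_lag1D j : continuous_R (deriv (lag1D N tn j)).
Proof. apply continuous_R_derivable. intros t. apply deriv_lag1D_derivable. Qed.

Lemma Jac_t_indep r s t : Jac nu r s t = Jac nu r s 0.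
Proof. rewrite !(Jac_wedge nu Hvm). reflexivity. Qed.

Lemma mass_kron p q : In p IW -> In q IW -> mass p q = kron Mtri M1D p q.
Proof.
  intros [Hp _]%In_idx2 [Hq _]%In_idx2. unfold mass, kron, Mtri, M1D.
  apply intW_tensor.
  - repeat apply separable_mult; auto using separable_ltri, separable_Jac.
  - apply continuous_R_mult; apply continuous_R_lag1D.
  - intros r s t _ _. unfold ell. rewrite Jac_t_indep. ring.
Qed.

Lemma Mtri_invertible : exists B, is_inv IT Nat.eq_dec Mtri B.
Proof.
  apply (gram_triangle_invertible _ ltri (fun r s => Jac nu r s 0) pr ps).
  - apply separable_ltri.
  - apply separable_Jac; auto.
  - intros r s Hrs. apply HJ. unfold in_W, in_T in *; lra.
  - intros k Hk. apply Hpts, Hk.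
  - intros i k Hi Hk. apply Hlag; auto.
Qed.

Lemma M1D_invertible : exists B, is_inv I1 Nat.eq_dec M1D B.
Proof.
  apply (gram_interval_invertible _ _ tn).
  - apply continuous_R_lag1D.
  - intros k Hk. apply tn_in_unit. lia.
  - intros i k Hi Hk. apply lag1D_node; [lia | lia | apply nodes_injective_tn].
Qed.

Lemma mass_invertible : exists B, is_inv IW pair_eq_dec mass B.
Proof.
  destruct Mtri_invertible as [BT HT], M1D_invertible as [B1 H1].
  exists (kron BT B1). apply (is_inv_ext _ _ (kron Mtri M1D)).
  - intros p q Hp Hq. symmetry; apply mass_kron; auto.
  - apply is_inv_kron; auto.
Qed.

Lemma Mtri_Ltri i i' : In i IT -> mmul IT Mtri Ltri i i' = Mhat i i'.
Proof.
  intros Hi. destruct Mtri_invertible as [B HB].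
  apply (mmul_minv_cancel_r _ _ (NoDup_idx1 _) _ B); auto.
Qed.

Lemma intT_poly_ltri_Jac f i : is_polyN N f -> (i < Ntri N)%nat ->
  intT (fun r s => f r s * ltri i r s * Jac nu r s 0) = msum IT (fun k => Mtri i k * f (pr k) (ps k)).
Proof.
  intros Hf Hi.
  assert (Hsep : forall k, In k IT -> separable (fun r s => ltri i r s * ltri k r s * Jac nu r s 0))
    by (intros k Hk; apply In_idx1 in Hk; repeat apply separable_mult;
        auto using separable_ltri, separable_Jac).
  rewrite (intT_ext _ (fun r s => msum IT (fun k =>
             f (pr k) (ps k) * (ltri i r s * ltri k r s * Jac nu r s 0)))).
  - rewrite intT_msum by (intros; apply separable_scal; auto).
    apply msum_ext; intros k Hk. rewrite intT_scal by auto. unfold Mtri. ring.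
  - intros r s. rewrite (ltri_interp f Hf r s), <- !msum_scal_r.
    apply msum_ext; intros; ring.
Qed.

Lemma diagtJ_Dt c b j' : (c < 2)%nat -> (b <= N)%nat ->
  mmul I1 (diagtJ c) Dt b j' = tJ nu c (tn b) * Dt b j'.
Proof.
  intros Hc Hb. unfold mmul, diagtJ.
  rewrite (msum_ext _ _ (fun m => (if Nat.eq_dec b m then 1 else 0) * (tJ nu c (tn b) * Dt m j'))).
  - apply (msum_delta Nat.eq_dec I1 b (fun m => tJ nu c (tn b) * Dt m j'));
      [apply NoDup_idx1 | apply In_idx1; lia].
  - intros m _. destruct (Nat.eq_dec b m) as [<- | ]; [| ring].
    pose proof (tn_in_unit b Hb).
    rewrite (gfac_t_Jac nu Hvm HJ) by (auto; unfold in_W; lra). ring.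
Qed.

Lemma RInt_tJ_deriv_lag1D c j j' : (j' <= N)%nat ->
  RInt (fun t => tJ nu c t * deriv (lag1D N tn j') t * lag1D N tn j t) 0 1 =
  msum I1 (fun k => M1D j k * (tJ nu c (tn k) * Dt k j')).
Proof.
  intros Hj.
  transitivity (RInt (fun t => msum I1 (fun k =>
                  (tJ nu c (tn k) * Dt k j') * (lag1D N tn j t * lag1D N tn k t))) 0 1).
  - apply RInt_ext. intros t _. rewrite (tJ_affine nu c t).
    rewrite (affine_deriv_lag1D_interp N tn _ _ j' nodes_injective_tn Hj t), <- msum_scal_r.
    apply msum_ext; intros k _. rewrite (tJ_affine nu c (tn k)). unfold Dt. ring.
  - rewrite RInt_msum.
    + apply msum_ext; intros k _. rewrite RInt_scal_l; [unfold M1D; ring |].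
      apply continuous_R_mult; apply continuous_R_lag1D.
    + intros k _. apply continuous_R_mult; [apply continuous_R_const |].
      apply continuous_R_mult; apply continuous_R_lag1D.
Qed.

Lemma d_r_ell q r s t : (fst q < Ntri N)%nat ->
  d_r (ell q) r s t = deriv (fun u => ltri (fst q) u s) r * lag1D N tn (snd q) t.
Proof.
  intros Hq. unfold d_r, ell. apply deriv_unique.
  apply (derivable_pt_lim_ext (fun u => lag1D N tn (snd q) t * ltri (fst q) u s)); [intros; ring |].
  rewrite Rmult_comm. apply (derivable_pt_lim_scal (fun u => ltri (fst q) u s)).
  apply (is_polyN_deriv_r N), Hlag, Hq.
Qed.

Lemma d_s_ell q r s t : (fst q < Ntri N)%nat ->
  d_s (ell q) r s t = deriv (fun u => ltri (fst q) r u) s * lag1D N tn (snd q) t.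
Proof.
  intros Hq. unfold d_s, ell. apply deriv_unique.
  apply (derivable_pt_lim_ext (fun u => lag1D N tn (snd q) t * ltri (fst q) r u)); [intros; ring |].
  rewrite Rmult_comm. apply (derivable_pt_lim_scal (fun u => ltri (fst q) r u)).
  apply (is_polyN_deriv_s N), Hlag, Hq.
Qed.

Lemma d_t_ell q r s t : d_t (ell q) r s t = ltri (fst q) r s * deriv (lag1D N tn (snd q)) t.
Proof.
  unfold d_t, ell. apply deriv_unique, (derivable_pt_lim_scal (lag1D N tn (snd q))).
  apply lag1D_derivable.
Qed.

Lemma stiff_integrand c p q r s t : (c < 2)%nat -> (fst q < Ntri N)%nat -> in_T r s -> 0 <= t <= 1 ->
  dphi c q r s t * ell p r s t * Jac nu r s t =
  (gfac nu 0 c 0 0 0 * deriv (fun u => ltri (fst q) u s) r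
   + gfac nu 1 c 0 0 0 * deriv (fun u => ltri (fst q) r u) s) * ltri (fst p) r s * Jac nu r s 0
    * (lag1D N tn (snd q) t * lag1D N tn (snd p) t)
  + ltri (fst q) r s * ltri (fst p) r s
    * (tJ nu c t * deriv (lag1D N tn (snd q)) t * lag1D N tn (snd p) t).
Proof.
  intros Hc Hq Hrs Ht. assert (HW : in_W r s t) by (unfold in_W, in_T in *; lra).
  unfold dphi. rewrite d_r_ell, d_s_ell, d_t_ell by auto.
  rewrite (gfac_r_const nu Hvm HJ c r s t), (gfac_s_const nu Hvm HJ c r s t) by auto.
  rewrite <- (gfac_t_Jac nu Hvm HJ c r s t) by auto.
  rewrite (Jac_t_indep r s t). unfold ell. ring.
Qed.

Lemma stiff_eq c p q : (c < 2)%nat -> In p IW -> In q IW ->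
  stiff c p q =
  (gfac nu 0 c 0 0 0 * mmul IT Mtri Dr (fst p) (fst q)
   + gfac nu 1 c 0 0 0 * mmul IT Mtri Ds (fst p) (fst q)) * M1D (snd q) (snd p)
  + Mhat (fst p) (fst q) * mmul I1 M1D (mmul I1 (diagtJ c) Dt) (snd p) (snd q).
Proof.
  intros Hc [Hp1 Hp2]%In_idx2 [Hq1 Hq2]%In_idx2.
  destruct (is_polyN_deriv_r N _ (proj1 (Hlag _ Hq1))) as [HdR _].
  destruct (is_polyN_deriv_s N _ (proj1 (Hlag _ Hq1))) as [HdS _].
  set (dR r s := deriv (fun u => ltri (fst q) u s) r) in *.
  set (dS r s := deriv (fun u => ltri (fst q) r u) s) in *.
  assert (HJ0 : separable (fun r s => Jac nu r s 0)) by (apply separable_Jac; auto).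
  pose proof (is_polyN_separable N _ HdR) as HdR'.
  pose proof (is_polyN_separable N _ HdS) as HdS'.
  unfold stiff. rewrite (intW_tensor2 _
      (fun r s => (gfac nu 0 c 0 0 0 * dR r s + gfac nu 1 c 0 0 0 * dS r s)
                  * ltri (fst p) r s * Jac nu r s 0)
      (fun r s => ltri (fst q) r s * ltri (fst p) r s)
      (fun t => lag1D N tn (snd q) t * lag1D N tn (snd p) t)
      (fun t => tJ nu c t * deriv (lag1D N tn (snd q)) t * lag1D N tn (snd p) t)).
  - f_equal; f_equal.
    + rewrite (intT_ext _ (fun r s => gfac nu 0 c 0 0 0 * (dR r s * ltri (fst p) r s * Jac nu r s 0)
                                   + gfac nu 1 c 0 0 0 * (dS r s * ltri (fst p) r s * Jac nu r s 0)))
        by (intros; ring).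
      rewrite intT_plus, !intT_scal, !intT_poly_ltri_Jac by
        (auto; repeat apply separable_scal; repeat apply separable_mult; auto using separable_ltri).
      reflexivity.
    + unfold Mhat. apply intT_ext; intros; ring.
    + rewrite RInt_tJ_deriv_lag1D by lia. apply msum_ext; intros k Hk.
      apply In_idx1 in Hk. rewrite diagtJ_Dt by lia. reflexivity.
  - repeat apply separable_mult; auto using separable_ltri.
    apply separable_plus; apply separable_scal; auto.
  - apply separable_mult; apply separable_ltri; auto.
  - apply continuous_R_mult; apply continuous_R_lag1D.
  - apply continuous_R_mult; [apply continuous_R_mult |];
      auto using continuous_R_tJ, continuous_R_deriv_lag1D, continuous_R_lag1D.
  - intros r s t Hrs Ht. apply stiff_integrand; auto.
Qed.

Lemma M1D_sym j j' : M1D j j' = M1D j' j.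
Proof. unfold M1D. apply RInt_ext. intros; apply Rmult_comm. Qed.

Lemma mmul_Mtri_Gtri c i i' : mmul IT Mtri (Gtri c) i i' =
  gfac nu 0 c 0 0 0 * mmul IT Mtri Dr i i' + gfac nu 1 c 0 0 0 * mmul IT Mtri Ds i i'.
Proof.
  unfold mmul, Gtri. rewrite <- !msum_scal_l, <- msum_plus. apply msum_ext; intros; ring.
Qed.

Lemma stiff_mass_rhs c p q : (c < 2)%nat -> In p IW -> In q IW ->
  stiff c p q = mmul IW mass (rhs c) p q.
Proof.
  intros Hc Hp Hq.
  rewrite (mmul_ext_l _ _ (kron Mtri M1D)) by (intros; apply mass_kron; auto).
  unfold rhs. rewrite mmul_plus_r.
  change IW with (list_prod IT I1). rewrite !mmul_kron. unfold kron.
  pose proof Hp as [Hp1 Hp2]%In_idx2. pose proof Hq as [Hq1 Hq2]%In_idx2.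
  rewrite mmul_idm_r, Mtri_Ltri, mmul_Mtri_Gtri, stiff_eq, M1D_sym
    by (auto using NoDup_idx1; apply In_idx1; auto).
  reflexivity.
Qed.

Lemma diff_matrix_eq c p q : (c < 2)%nat -> In p IW -> In q IW ->
  mmul IW (minv IW pair_eq_dec mass) (stiff c) p q = rhs c p q.
Proof.
  intros Hc Hp Hq. destruct mass_invertible as [B HB].
  rewrite (mmul_ext_r _ _ (stiff c) (mmul IW mass (rhs c))) by (intros; apply stiff_mass_rhs; auto).
  apply (mmul_minv_cancel_l _ _ (NoDup_idx2 _ _) _ B); auto.
Qed.

End DifferentiationMatrices.
Theorem mainTheorem5 (N : nat) (HN : (1 <= N)%nat)
  (nu : nat -> nat -> R) (Hvm : vertically_mapped nu)
  (HJ : forall r s t, in_W r s t -> 0 < Jac nu r s t)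
  (pr ps : nat -> R) (ltri : nat -> R -> R -> R) (tn : nat -> R)
  (Hpts : forall i, (i < Ntri N)%nat -> 0 <= pr i /\ 0 <= ps i /\ pr i + ps i <= 1)
  (Huni : forall f, is_polyN N f ->
            (forall i, (i < Ntri N)%nat -> f (pr i) (ps i) = 0) -> forall r s, f r s = 0)
  (Hlag : forall i, (i < Ntri N)%nat ->
            is_polyN N (ltri i) /\
            forall k, (k < Ntri N)%nat -> ltri i (pr k) (ps k) = if Nat.eq_dec i k then 1 else 0)
  (HGLL : is_GLL N tn) :
  let l1 := lag1D N tn in
  let ell := fun (p : nat * nat) (r s t : R) => ltri (fst p) r s * l1 (snd p) t in
  let J := Jac nu in
  let IW := idx2 (Ntri N) (S N) in
  let IT := idx1 (Ntri N) in
  let I1 := idx1 (S N) in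
  (* mass matrix M^k *)
  let M := fun p q => intW (fun r s t => ell p r s t * ell q r s t * J r s t) in
  (* d phi_q / d x_c (c = 0: x, c = 1: y) by the chain rule in reference coordinates *)
  let dphi := fun (c : nat) (q : nat * nat) (r s t : R) =>
      gfac nu 0 c r s t * d_r (ell q) r s t + gfac nu 1 c r s t * d_s (ell q) r s t
      + gfac nu 2 c r s t * d_t (ell q) r s t in
  (* weak differentiation matrices S^k_x, S^k_y *)
  let Sw := fun (c : nat) p q => intW (fun r s t => dphi c q r s t * ell p r s t * J r s t) in
  (* D^k_x, D^k_y *)
  let Dk := fun (c : nat) => mmul IW (minv IW pair_eq_dec M) (Sw c) in
  let Mtri := fun i i' => intT (fun r s => ltri i r s * ltri i' r s * J r s 0) in
  let Mhat := fun i i' => intT (fun r s => ltri i r s * ltri i' r s) in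
  let Dr := fun i i' => deriv (fun u => ltri i' u (ps i)) (pr i) in
  let Ds := fun i i' => deriv (fun u => ltri i' (pr i) u) (ps i) in
  let Dt := fun j j' => deriv (l1 j') (tn j) in
  let Ltri := mmul IT (minv IT Nat.eq_dec Mtri) Mhat in
  (* diag(t_c J^k), entries evaluated at t = t_j (independent of r, s) *)
  let diagtJ := fun (c : nat) j j' =>
      if Nat.eq_dec j j' then gfac nu 2 c 0 0 (tn j) * J 0 0 (tn j) else 0 in
  (* right-hand side; the constant factors r_c, s_c are evaluated at the origin *)
  let RHS := fun (c : nat) p q =>
      kron (fun i i' => gfac nu 0 c 0 0 0 * Dr i i' + gfac nu 1 c 0 0 0 * Ds i i')
           (idm Nat.eq_dec) p q
      + kron Ltri (mmul I1 (diagtJ c) Dt) p q in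
  forall p q, In p IW -> In q IW ->
    Dk 0%nat p q = RHS 0%nat p q /\ Dk 1%nat p q = RHS 1%nat p q.
Proof.
  intros l1 ell J IW IT I1 M dphi Sw Dk Mtri Mhat Dr Ds Dt Ltri diagtJ RHS p q Hp Hq.
  split; apply (diff_matrix_eq N nu Hvm HJ pr ps ltri tn Hpts Huni Hlag HGLL); auto.
Qed.
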